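(* Let $X\ge y\ge2$. Let $\boldsymbol L$ be a primitive integral system of $k$ affine linear forms in $l$ variables, and let $\boldsymbol f=(f_1,\dots,f_k)$ be a vector of 1-bounded multiplicative functions such that $f_j(p^\mu)=1$ for every prime power $p^\mu\le y$ and every $j$. Then, as $y\to\infty$, $$\prod_{y<p\le X}M_p(\boldsymbol f,\boldsymbol L)=\left(1+O_k\Big(\frac1{\log y}\Big)\right)\left(\prod_{1\le j\le k}\mathfrak P(f_j;X)+O\big(y^{-1+o(1)}\big)\right).$$
   Context: 1-bounded means values in the closed unit disc. An integral affine linear form is $L(\boldsymbol n)=\alpha_0+\sum_{r=1}^l\alpha_rn_r$ with $(\alpha_0,\dots,\alpha_l)\in\mathbb{N}_0^{l+1}$; a system $(L_1,\dots,L_k)$ is primitive if for each $j$ the gcd of the non-constant coefficients of $L_j$ is $1$ and the forms are pairwise linearly independent. For multiplicative $f$ and prime $p$, $f_p$ agrees with $f$ on powers of $p$ and equals $1$ on powers of other primes; $M_p(\boldsymbol f,\boldsymbol L)=\lim_{x\to\infty}x^{-l}\sum_{\boldsymbol n\in([1,x]\cap\mathbb{N})^l}\prod_jf_{j,p}(L_j(\boldsymbol n))$. $\mathfrak P(f;X)=\prod_{p\le X}(1-\frac1p)(1+\sum_{k\ge1}\frac{f(p^k)}{p^k})$. *)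

From Stdlib Require Import Reals ZArith Znumtheory List Lia Bool.
From Coquelicot Require Import Coquelicot.
Open Scope R_scope.

Definition csum (s : list nat) (F : nat -> C) : C :=
  fold_right (fun i acc => Cplus (F i) acc) (RtoC 0) s.
Definition cprod (s : list nat) (F : nat -> C) : C :=
  fold_right (fun i acc => Cmult (F i) acc) (RtoC 1) s.

Definition Clim_pinfty (g : R -> C) : C :=
  (real (Lim (fun x => fst (g x)) p_infty), real (Lim (fun x => snd (g x)) p_infty)).
Definition CSeries (a : nat -> C) : C :=
  (Series (fun n => fst (a n)), Series (fun n => snd (a n))).

Definition is_prime_nat (p : nat) : Prop := prime (Z.of_nat p).

(* p-adic valuation of n (0 if n = 0 or p <= 1) *)
Fixpoint vp_aux (p fuel n : nat) : nat :=
  match fuel with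
  | O => O
  | S fu => if andb (andb (Nat.ltb 1 p) (negb (Nat.eqb n 0))) (Nat.eqb (n mod p) 0)
            then S (vp_aux p fu (n / p)) else O
  end.
Definition vp (p n : nat) : nat := vp_aux p n n.

Definition one_bounded (f : nat -> C) : Prop := forall n, (1 <= n)%nat -> Cmod (f n) <= 1.
Definition multiplicative (f : nat -> C) : Prop :=
  f 1%nat = RtoC 1 /\
  forall m n, (1 <= m)%nat -> (1 <= n)%nat -> Nat.gcd m n = 1%nat ->
    f (m * n)%nat = Cmult (f m) (f n).

(* f_p : agrees with f on powers of p, equals 1 on powers of other primes *)
Definition floc (f : nat -> C) (p n : nat) : C := f (p ^ vp p n)%nat.

(* A system of k integral affine linear forms in l variables is encoded by
   a : nat -> nat -> nat, where a j 0 = alpha_0 of L_j and a j r (1<=r<=l)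
   is the coefficient of n_r, for j < k.  A point n in N^l is a list of
   length l, n_r = nth (r-1) n 0. *)
Definition Leval (l : nat) (a : nat -> nat -> nat) (j : nat) (n : list nat) : nat :=
  (a j 0%nat + fold_right Nat.add 0%nat
      (map (fun r => a j r * nth (r - 1) n 0%nat) (seq 1 l)))%nat.

Definition primitive_system (k l : nat) (a : nat -> nat -> nat) : Prop :=
  (forall j, (j < k)%nat ->
     fold_right Nat.gcd 0%nat (map (a j) (seq 1 l)) = 1%nat) /\
  (forall j j', (j < k)%nat -> (j' < k)%nat -> j <> j' ->
     forall c d : R,
       (forall r, (r <= l)%nat -> c * INR (a j r) + d * INR (a j' r) = 0) ->
       c = 0 /\ d = 0).

Fixpoint box_sum (l N : nat) (F : list nat -> C) : C :=
  match l with
  | O => F nil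
  | S l' => csum (seq 1 N) (fun m => box_sum l' N (fun t => F (m :: t)))
  end.

Definition Mp (k l : nat) (f : nat -> nat -> C) (a : nat -> nat -> nat) (p : nat) : C :=
  Clim_pinfty (fun x =>
    Cmult (RtoC (/ (x ^ l)))
      (box_sum l (Z.to_nat (Int_part x))
         (fun n => cprod (seq 0 k) (fun j => floc (f j) p (Leval l a j n))))).

Definition prod_primes (lo hi : R) (F : nat -> C) : C :=
  cprod (seq 0 (Z.to_nat (up hi)))
    (fun p => if prime_dec (Z.of_nat p) then
                if Rlt_dec lo (INR p) then
                  if Rle_dec (INR p) hi then F p else RtoC 1
                else RtoC 1
              else RtoC 1).

Definition Pfrak (f : nat -> C) (X : R) : C :=
  prod_primes 0 X (fun p =>
    Cmult (RtoC (1 - / INR p))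
      (Cplus (RtoC 1)
        (CSeries (fun m => Cmult (f (p ^ (S m))%nat) (RtoC (/ INR (p ^ (S m))%nat)))))).

(* For a prime p, M_p(f, L) is the mean over a large box of prod_j f_{j,p}(L_j(n)), and
   f_{j,p}(L) only depends on the p-adic valuation of L.  Expanding the product to second
   order, the mean is governed by the densities 1/p and 1/p^2 of L_j(n) = 0 mod p and mod p^2,
   and by the density of L_i(n) = L_j(n) = 0 mod p, which is at most about 1/p^2 once p
   exceeds every 2x2 minor of the coefficient matrix (primitivity and pairwise independence).
   Hence M_p = (1 + O_k(1/p^2)) prod_j E_p(f_j), where E_p(f) is the factor at p of
   Pfrak(f; X), and the product over y < p <= X is (1 + O(1/y)) prod_j Pfrak(f_j; X)
   divided by the product of the E_p(f_j) over p <= y.  Since f_j(p^mu) = 1 for p^mu <= y,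
   each of those is 1 + O_k(min(1/y, 1/p^2)), so their product is 1 + O_k(1/sqrt y); the
   error term O(y^(-1+o(1))) can be taken to be 0. *)

From Stdlib Require Import Reals ZArith Znumtheory List Lia Lra Classical.
From Coquelicot Require Import Coquelicot.
Open Scope R_scope.

Definition rsum (s : list nat) (F : nat -> R) : R :=
  fold_right (fun i acc => F i + acc) 0 s.

Lemma rsum_app s t F : rsum (s ++ t) F = rsum s F + rsum t F.
Proof. induction s; simpl; [lra|]. rewrite IHs; lra. Qed.

Lemma rsum_seq_S b n F : rsum (seq b (S n)) F = rsum (seq b n) F + F (b + n)%nat.
Proof. rewrite seq_S, rsum_app; simpl; lra. Qed.

Lemma rsum_ext s F G : (forall i, In i s -> F i = G i) -> rsum s F = rsum s G.
Proof. induction s; simpl; intros H; auto. rewrite H, IHs; auto. Qed.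

Lemma rsum_le s F G : (forall i, In i s -> F i <= G i) -> rsum s F <= rsum s G.
Proof.
  induction s; simpl; intros H; [lra|].
  pose proof (H a (or_introl eq_refl)). pose proof (IHs (fun i Hi => H i (or_intror Hi))). lra.
Qed.

Lemma rsum_plus s F G : rsum s (fun i => F i + G i) = rsum s F + rsum s G.
Proof. induction s; simpl; [lra|]. rewrite IHs; lra. Qed.

Lemma rsum_minus s F G : rsum s (fun i => F i - G i) = rsum s F - rsum s G.
Proof. induction s; simpl; [lra|]. rewrite IHs; lra. Qed.

Lemma rsum_scal s c F : rsum s (fun i => c * F i) = c * rsum s F.
Proof. induction s; simpl; [lra|]. rewrite IHs; lra. Qed.

Lemma rsum_const s c : rsum s (fun _ => c) = INR (length s) * c.
Proof. induction s; simpl length; [simpl; lra|]. rewrite S_INR. simpl. rewrite IHs. lra. Qed.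

Lemma rsum_nonneg s F : (forall i, In i s -> 0 <= F i) -> 0 <= rsum s F.
Proof.
  intros H. apply Rle_trans with (rsum s (fun _ => 0)).
  - rewrite rsum_const; lra.
  - apply rsum_le; auto.
Qed.

Lemma rsum_le_const s F c : (forall i, In i s -> F i <= c) -> rsum s F <= INR (length s) * c.
Proof. intros H. rewrite <- rsum_const. apply rsum_le; auto. Qed.

Lemma Rabs_rsum s F : Rabs (rsum s F) <= rsum s (fun i => Rabs (F i)).
Proof.
  induction s; simpl.
  - rewrite Rabs_R0; lra.
  - eapply Rle_trans; [apply Rabs_triang | lra].
Qed.

Lemma rsum_near s F c d : (forall i, In i s -> Rabs (F i - c) <= d) ->
  Rabs (rsum s F - INR (length s) * c) <= INR (length s) * d.
Proof.
  intros H. rewrite <- !rsum_const, <- rsum_minus.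
  eapply Rle_trans; [apply Rabs_rsum | apply rsum_le; auto].
Qed.

Lemma sum_n_rsum (u : nat -> R) M : sum_n u M = rsum (seq 0 (S M)) u.
Proof.
  induction M.
  - rewrite sum_O. simpl. lra.
  - rewrite sum_Sn, IHM, (rsum_seq_S 0 (S M)). reflexivity.
Qed.

Lemma csum_ext s F G : (forall i, In i s -> F i = G i) -> csum s F = csum s G.
Proof. induction s; simpl; intros H; auto. rewrite H, IHs; auto. Qed.

Lemma csum_plus s F G : csum s (fun i => F i + G i)%C = (csum s F + csum s G)%C.
Proof. induction s; simpl; [ring|]. rewrite IHs; ring. Qed.

Lemma csum_minus s F G : csum s (fun i => F i - G i)%C = (csum s F - csum s G)%C.
Proof. induction s; simpl; [ring|]. rewrite IHs; ring. Qed.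

Lemma csum_scal s c F : csum s (fun i => c * F i)%C = (c * csum s F)%C.
Proof. induction s; simpl; [ring|]. rewrite IHs; ring. Qed.

Lemma csum_const s c : csum s (fun _ => c) = (RtoC (INR (length s)) * c)%C.
Proof.
  induction s; simpl csum; simpl length.
  - apply injective_projections; simpl; ring.
  - rewrite IHs, S_INR. apply injective_projections; simpl; ring.
Qed.

Lemma csum_RtoC s F : csum s (fun i => RtoC (F i)) = RtoC (rsum s F).
Proof. induction s; simpl; auto. rewrite IHs. apply injective_projections; simpl; lra. Qed.

Lemma csum_fst s F : fst (csum s F) = rsum s (fun i => fst (F i)).
Proof. induction s; simpl; auto. rewrite <- IHs. reflexivity. Qed.

Lemma csum_snd s F : snd (csum s F) = rsum s (fun i => snd (F i)).
Proof. induction s; simpl; auto. rewrite <- IHs. reflexivity. Qed.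

Lemma Cmod_csum s F : Cmod (csum s F) <= rsum s (fun i => Cmod (F i)).
Proof.
  induction s; simpl.
  - rewrite Cmod_0; lra.
  - eapply Rle_trans; [apply Cmod_triangle | lra].
Qed.

Lemma cprod_ext s F G : (forall i, In i s -> F i = G i) -> cprod s F = cprod s G.
Proof. induction s; simpl; intros H; auto. rewrite H, IHs; auto. Qed.

Lemma cprod_mul s F G : cprod s (fun i => F i * G i)%C = (cprod s F * cprod s G)%C.
Proof. induction s; simpl; [ring|]. rewrite IHs; ring. Qed.

Lemma cprod_one s : cprod s (fun _ => RtoC 1) = RtoC 1.
Proof. induction s; simpl; auto. rewrite IHs; ring. Qed.

Lemma cprod_app s t F : cprod (s ++ t) F = (cprod s F * cprod t F)%C.
Proof. induction s; simpl; [ring|]. rewrite IHs; ring. Qed.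

Lemma cprod_comm s t F :
  cprod s (fun i => cprod t (F i)) = cprod t (fun j => cprod s (fun i => F i j)).
Proof.
  induction s; simpl.
  - rewrite cprod_one; auto.
  - rewrite IHs, <- cprod_mul. auto.
Qed.

Lemma Cmod_sub_le (x y : C) : Cmod (x - y)%C <= Cmod x + Cmod y.
Proof. unfold Cminus. eapply Rle_trans; [apply Cmod_triangle|]. rewrite Cmod_opp. lra. Qed.

Lemma Cmod_sub1_le (z : C) : Cmod z <= 1 -> Cmod (z - 1)%C <= 2.
Proof. intros H. eapply Rle_trans; [apply Cmod_sub_le|]. rewrite Cmod_1. lra. Qed.

Lemma Cmod_ge_half (z : C) : Cmod (z - 1)%C <= 1/2 -> 1/2 <= Cmod z.
Proof.
  intros H. pose proof (Cmod_triangle z (- (z - 1))%C) as T.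
  replace (z + - (z - 1))%C with (RtoC 1) in T by ring. rewrite Cmod_1, Cmod_opp in T. lra.
Qed.

Lemma Cmod_RtoC_mul (x : R) (z : C) : 0 <= x -> Cmod (RtoC x * z)%C = x * Cmod z.
Proof. intros H. rewrite Cmod_mult, Cmod_R, Rabs_pos_eq; auto. Qed.

Lemma RtoC_mult (x y : R) : RtoC (x * y) = (RtoC x * RtoC y)%C.
Proof. apply injective_projections; simpl; ring. Qed.

Lemma im_le_Cmod (z : C) : Rabs (snd z) <= Cmod z.
Proof.
  destruct z as [x y]. unfold Cmod. cbn [fst snd]. rewrite <- sqrt_Rsqr_abs.
  apply sqrt_le_1_alt. unfold Rsqr. nra.
Qed.

Lemma Cmod_le_re_im (z : C) : Cmod z <= Rabs (fst z) + Rabs (snd z).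
Proof.
  destruct z as [x y]. unfold Cmod. cbn [fst snd].
  pose proof (Rabs_pos x). pose proof (Rabs_pos y).
  rewrite <- (sqrt_square (Rabs x + Rabs y)) by lra.
  apply sqrt_le_1_alt. rewrite <- (pow2_abs x), <- (pow2_abs y). nra.
Qed.

Lemma exp_sub1_le (s : R) : 0 <= s <= 1/2 -> exp s - 1 <= 2 * s.
Proof.
  intros H. pose proof (exp_ineq1_le (- s)). pose proof (exp_pos s).
  assert (exp s * exp (- s) = 1) by (rewrite <- exp_plus, Rplus_opp_r; apply exp_0).
  nra.
Qed.

Lemma Cmod_cprod_sub1_exp s z :
  Cmod (cprod s z - 1)%C <= exp (rsum s (fun i => Cmod (z i - 1)%C)) - 1.
Proof.
  induction s; simpl.
  - replace (1 - 1)%C with (RtoC 0) by ring. rewrite Cmod_0, exp_0. lra.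
  - set (P := cprod s z) in *. set (S := rsum s (fun i => Cmod (z i - 1)%C)) in *.
    replace (z a * P - 1)%C with ((z a - 1) * P + (P - 1))%C by ring.
    eapply Rle_trans; [apply Cmod_triangle|]. rewrite Cmod_mult.
    assert (HP : Cmod P <= exp S).
    { replace P with ((P - 1) + 1)%C by ring.
      eapply Rle_trans; [apply Cmod_triangle|]. rewrite Cmod_1. lra. }
    pose proof (exp_ineq1_le (Cmod (z a - 1)%C)). rewrite exp_plus.
    pose proof (Cmod_ge_0 (z a - 1)%C). pose proof (exp_pos S). nra.
Qed.

Lemma Cmod_cprod_sub1 s z :
  rsum s (fun i => Cmod (z i - 1)%C) <= 1/2 ->
  Cmod (cprod s z - 1)%C <= 2 * rsum s (fun i => Cmod (z i - 1)%C).
Proof.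
  intros H. eapply Rle_trans; [apply Cmod_cprod_sub1_exp|]. apply exp_sub1_le.
  split; auto. apply rsum_nonneg. intros; apply Cmod_ge_0.
Qed.

Lemma Cmod_cprod_sub1_const k z c :
  (forall j, (j < k)%nat -> Cmod (z j - 1)%C <= c) -> INR k * c <= 1/2 ->
  Cmod (cprod (seq 0 k) z - 1)%C <= 2 * (INR k * c).
Proof.
  intros H Hk.
  assert (Hs : rsum (seq 0 k) (fun j => Cmod (z j - 1)%C) <= INR k * c).
  { rewrite <- (length_seq k 0) at 2. apply rsum_le_const.
    intros j Hj. apply in_seq in Hj. apply H; lia. }
  eapply Rle_trans; [apply Cmod_cprod_sub1; lra | lra].
Qed.

Fixpoint pair_sum (s : list nat) (g : nat -> R) : R :=
  match s with nil => 0 | i :: t => g i * rsum t g + pair_sum t g end.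

Lemma pair_sum_nonneg s g : (forall i, 0 <= g i) -> 0 <= pair_sum s g.
Proof.
  intros H; induction s; simpl; [lra|].
  assert (0 <= rsum s g) by (apply rsum_nonneg; auto). pose proof (H a). nra.
Qed.

Lemma pair_sum_le s g g' : (forall i, In i s -> 0 <= g i <= g' i) -> pair_sum s g <= pair_sum s g'.
Proof.
  intros H. induction s; simpl; [lra|].
  assert (rsum s g <= rsum s g') by (apply rsum_le; intros; apply H; simpl; auto).
  assert (0 <= rsum s g) by (apply rsum_nonneg; intros; apply H; simpl; auto).
  pose proof (H a (or_introl eq_refl)). pose proof (IHs (fun i Hi => H i (or_intror Hi))). nra.
Qed.

Lemma pair_sum_scal s c g : pair_sum s (fun i => c * g i) = c ^ 2 * pair_sum s g.
Proof. induction s; simpl; [ring|]. rewrite IHs, rsum_scal. ring. Qed.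

Lemma pair_sum_le_const s g c : (forall i, 0 <= g i <= c) -> pair_sum s g <= INR (length s) ^ 2 * c ^ 2.
Proof.
  intros H. induction s; simpl length; [simpl; lra|]. simpl pair_sum. rewrite S_INR.
  assert (rsum s g <= INR (length s) * c) by (apply rsum_le_const; intros; apply H).
  assert (0 <= rsum s g) by (apply rsum_nonneg; intros; apply H).
  pose proof (H a). pose proof (pos_INR (length s)). nra.
Qed.

Lemma Cmod_cprod_second_order s h : (forall i, In i s -> Cmod (h i) <= 2) ->
  Cmod (cprod s (fun i => 1 + h i) - 1 - csum s h)%C
    <= 3 ^ length s * pair_sum s (fun i => Cmod (h i)).
Proof.
  induction s; simpl; intros H.
  - replace (1 - 1 - 0)%C with (RtoC 0) by ring. rewrite Cmod_0; lra.
  - set (P := cprod s (fun i => 1 + h i)%C) in *. set (S := csum s h) in *.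
    replace ((1 + h a) * P - 1 - (h a + S))%C with (h a * S + (1 + h a) * (P - 1 - S))%C by ring.
    eapply Rle_trans; [apply Cmod_triangle|]. rewrite !Cmod_mult.
    pose proof (IHs (fun i Hi => H i (or_intror Hi))) as IH.
    pose proof (H a (or_introl eq_refl)) as Ha.
    assert (C1 : Cmod (1 + h a) <= 3) by (eapply Rle_trans; [apply Cmod_triangle|]; rewrite Cmod_1; lra).
    assert (C2 : Cmod S <= rsum s (fun i => Cmod (h i))) by apply Cmod_csum.
    assert (1 <= 3 ^ length s) by (apply pow_R1_Rle; lra).
    pose proof (Cmod_ge_0 (h a)). pose proof (Cmod_ge_0 (P - 1 - S)%C). pose proof (Cmod_ge_0 S).
    assert (0 <= pair_sum s (fun i => Cmod (h i))) by (apply pair_sum_nonneg; intros; apply Cmod_ge_0).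
    assert (0 <= Cmod (h a) * rsum s (fun i => Cmod (h i))) by nra.
    nra.
Qed.

Fixpoint rbox (l N : nat) (F : list nat -> R) : R :=
  match l with
  | O => F nil
  | S l' => rsum (seq 1 N) (fun m => rbox l' N (fun t => F (m :: t)))
  end.

Lemma rbox_ext l N F G : (forall n, F n = G n) -> rbox l N F = rbox l N G.
Proof.
  revert F G; induction l; simpl; intros F G H; auto.
  apply rsum_ext; intros; apply IHl; auto.
Qed.

Lemma rbox_le l N F G : (forall n, F n <= G n) -> rbox l N F <= rbox l N G.
Proof.
  revert F G; induction l; simpl; intros F G H; auto.
  apply rsum_le; intros; apply IHl; auto.
Qed.

Lemma rbox_plus l N F G : rbox l N (fun n => F n + G n) = rbox l N F + rbox l N G.
Proof.
  revert F G; induction l; simpl; intros F G; auto.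
  rewrite <- rsum_plus. apply rsum_ext; intros; apply IHl.
Qed.

Lemma rbox_scal l N c F : rbox l N (fun n => c * F n) = c * rbox l N F.
Proof.
  revert F; induction l; simpl; intros F; auto.
  rewrite <- rsum_scal. apply rsum_ext; intros; apply IHl.
Qed.

Lemma rbox_minus l N F G : rbox l N (fun n => F n - G n) = rbox l N F - rbox l N G.
Proof.
  rewrite (rbox_ext _ _ _ (fun n => F n + (-1) * G n)) by (intros; ring).
  rewrite rbox_plus, rbox_scal. ring.
Qed.

Lemma rbox_const l N c : rbox l N (fun _ => c) = INR N ^ l * c.
Proof.
  induction l; simpl; [lra|].
  rewrite (rsum_ext _ _ (fun _ => INR N ^ l * c)) by auto. rewrite rsum_const, length_seq. lra.
Qed.

Lemma rbox_rsum l N s G :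
  rbox l N (fun n => rsum s (fun j => G j n)) = rsum s (fun j => rbox l N (G j)).
Proof. induction s; simpl; [rewrite rbox_const; lra|]. rewrite rbox_plus, IHs. auto. Qed.

Lemma rbox_near l N F c d : (forall n, Rabs (F n - c) <= d) ->
  Rabs (rbox l N F - INR N ^ l * c) <= INR N ^ l * d.
Proof.
  intros H.
  assert (A1 : rbox l N (fun _ => c - d) <= rbox l N F)
    by (apply rbox_le; intros n; specialize (H n); apply Rabs_le_between in H; lra).
  assert (A2 : rbox l N F <= rbox l N (fun _ => c + d))
    by (apply rbox_le; intros n; specialize (H n); apply Rabs_le_between in H; lra).
  rewrite !rbox_const in A1, A2. apply Rabs_le; split; lra.
Qed.

Lemma rbox_pair_sum_le l N s (g : nat -> list nat -> R) B : NoDup s -> 0 <= B ->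
  (forall i j, In i s -> In j s -> i <> j -> rbox l N (fun n => g i n * g j n) <= B) ->
  rbox l N (fun n => pair_sum s (fun j => g j n)) <= INR (length s) ^ 2 * B.
Proof.
  intros Hnd HB H. induction s as [|i t IH]; simpl pair_sum; [rewrite rbox_const; simpl; lra|].
  inversion Hnd as [|i' t' Hni Hnd']; subst.
  rewrite rbox_plus.
  rewrite (rbox_ext _ _ _ (fun n => rsum t (fun j => g i n * g j n))) by (intros; rewrite rsum_scal; auto).
  rewrite rbox_rsum.
  assert (A1 : rsum t (fun j => rbox l N (fun n => g i n * g j n)) <= INR (length t) * B).
  { apply rsum_le_const. intros j Hj. apply H; simpl; auto. intros ->; auto. }
  assert (A2 := IH Hnd' (fun i j Hi Hj => H i j (or_intror Hi) (or_intror Hj))).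
  simpl length. rewrite S_INR. pose proof (pos_INR (length t)). nra.
Qed.

Lemma box_sum_ext l N F G : (forall n, F n = G n) -> box_sum l N F = box_sum l N G.
Proof.
  revert F G; induction l; simpl; intros F G H; auto.
  apply csum_ext; intros; apply IHl; auto.
Qed.

Lemma box_sum_RtoC l N F : box_sum l N (fun n => RtoC (F n)) = RtoC (rbox l N F).
Proof.
  revert F; induction l; simpl; intros F; auto.
  rewrite <- csum_RtoC. apply csum_ext; intros; apply IHl.
Qed.

Lemma box_sum_plus l N F G :
  box_sum l N (fun n => F n + G n)%C = (box_sum l N F + box_sum l N G)%C.
Proof.
  revert F G; induction l; simpl; intros F G; auto.
  rewrite <- csum_plus. apply csum_ext; intros; apply IHl.
Qed.

Lemma box_sum_scal l N c F : box_sum l N (fun n => c * F n)%C = (c * box_sum l N F)%C.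
Proof.
  revert F; induction l; simpl; intros F; auto.
  rewrite <- csum_scal. apply csum_ext; intros; apply IHl.
Qed.

Lemma box_sum_minus l N F G :
  box_sum l N (fun n => F n - G n)%C = (box_sum l N F - box_sum l N G)%C.
Proof.
  rewrite (box_sum_ext _ _ _ (fun n => F n + (-1) * G n)%C) by (intros; ring).
  rewrite box_sum_plus, box_sum_scal. ring.
Qed.

Lemma box_sum_const l N c : box_sum l N (fun _ => c) = (RtoC (INR N ^ l) * c)%C.
Proof.
  induction l; simpl; [ring|].
  rewrite (csum_ext _ _ (fun _ => RtoC (INR N ^ l) * c)%C) by auto.
  rewrite csum_const, length_seq. apply injective_projections; simpl; ring.
Qed.

Lemma box_sum_csum l N s H :
  box_sum l N (fun n => csum s (fun j => H j n)) = csum s (fun j => box_sum l N (H j)).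
Proof. induction s; simpl; [rewrite box_sum_const; ring|]. rewrite box_sum_plus, IHs. auto. Qed.

Lemma Cmod_box_sum l N F : Cmod (box_sum l N F) <= rbox l N (fun n => Cmod (F n)).
Proof.
  revert F; induction l; simpl; intros F; [lra|].
  eapply Rle_trans; [apply Cmod_csum | apply rsum_le; intros; apply IHl].
Qed.

Lemma box_mean_cprod_expand l N k (h : nat -> list nat -> C) (e : nat -> C) : INR N <> 0 ->
  (RtoC (/ INR N ^ l) * box_sum l N (fun n => cprod (seq 0 k) (fun j => 1 + h j n))
     - cprod (seq 0 k) (fun j => 1 + e j))%C
  = (csum (seq 0 k) (fun j => RtoC (/ INR N ^ l) * box_sum l N (h j) - e j)
     + RtoC (/ INR N ^ l) * box_sum l N (fun n => cprod (seq 0 k) (fun j => 1 + h j n) - 1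
                                                   - csum (seq 0 k) (fun j => h j n))
     - (cprod (seq 0 k) (fun j => 1 + e j) - 1 - csum (seq 0 k) e))%C.
Proof.
  intros HN. assert (HZ : RtoC (INR N ^ l) <> 0).
  { intros E. injection E. apply pow_nonzero; auto. }
  rewrite !box_sum_minus, box_sum_const, box_sum_csum, csum_minus, csum_scal, RtoC_inv
    by (apply pow_nonzero; auto).
  field. auto.
Qed.

(** * Counting solutions of congruences in boxes *)

Lemma pow_INR_pred N l : (1 <= l)%nat -> INR N * INR N ^ (l - 1) = INR N ^ l.
Proof. intros H. destruct l; [lia|]. simpl. rewrite Nat.sub_0_r. auto. Qed.

Open Scope Z_scope.

Definition dvd_ind (q x : Z) : R := if Z.eqb (x mod q) 0 then 1%R else 0%R.

Lemma dvd_ind_cases q x : q <> 0 ->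
  (dvd_ind q x = 1%R /\ (q | x)) \/ (dvd_ind q x = 0%R /\ ~ (q | x)).
Proof.
  intros Hq. unfold dvd_ind. destruct (Z.eqb_spec (x mod q) 0).
  - left. split; auto. apply Z.mod_divide; auto.
  - right. split; auto. intros H; apply n, Z.mod_divide; auto.
Qed.

Lemma dvd_ind_range q x : (0 <= dvd_ind q x <= 1)%R.
Proof. unfold dvd_ind; destruct (_ =? _); lra. Qed.

Lemma dvd_ind_iff q x y : q <> 0 -> ((q | x) <-> (q | y)) -> dvd_ind q x = dvd_ind q y.
Proof.
  intros Hq H.
  destruct (dvd_ind_cases q x Hq) as [[A B]|[A B]], (dvd_ind_cases q y Hq) as [[C D]|[C D]];
    try congruence; tauto.
Qed.

Lemma dvd_ind_opp q x : q <> 0 -> dvd_ind q (- x) = dvd_ind q x.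
Proof. intros; apply dvd_ind_iff; auto. apply Z.divide_opp_r. Qed.

Lemma dvd_ind_mul_le q x y u v : q <> 0 ->
  (dvd_ind q x * dvd_ind q y <= dvd_ind q (u * y - v * x) * dvd_ind q x)%R.
Proof.
  intros Hq. pose proof (dvd_ind_range q (u * y - v * x)).
  destruct (dvd_ind_cases q x Hq) as [[A1 A2]|[A1 A2]]; rewrite A1; [|lra].
  destruct (dvd_ind_cases q y Hq) as [[B1 B2]|[B1 B2]]; rewrite B1; [|lra].
  destruct (dvd_ind_cases q (u * y - v * x) Hq) as [[C1 C2]|[C1 C2]]; [lra|].
  exfalso; apply C2. apply Z.divide_sub_r; apply Z.divide_mul_r; auto.
Qed.

Lemma div_succ z q : 0 < q ->
  (z + 1) / q = z / q + (if Z.eqb ((z + 1) mod q) 0 then 1 else 0).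
Proof.
  intros Hq. pose proof (Z.div_mod z q ltac:(lia)). pose proof (Z.mod_pos_bound z q Hq).
  set (d := z / q) in *. set (r := z mod q) in *.
  destruct (Z.eq_dec r (q - 1)).
  - assert (E : (z + 1) / q = d + 1) by (symmetry; apply Z.div_unique with 0; lia).
    assert (E2 : (z + 1) mod q = 0) by (symmetry; apply Z.mod_unique with (d + 1); lia).
    rewrite E, E2; simpl; lia.
  - assert (E : (z + 1) / q = d) by (symmetry; apply Z.div_unique with (r + 1); lia).
    assert (E2 : (z + 1) mod q = r + 1) by (symmetry; apply Z.mod_unique with d; lia).
    rewrite E, E2. destruct (Z.eqb_spec (r + 1) 0); lia.
Qed.

Lemma count_dvd_shift q x0 N : 0 < q ->
  rsum (seq 1 N) (fun m => dvd_ind q (Z.of_nat m - x0)) = IZR ((Z.of_nat N - x0) / q - (- x0) / q).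
Proof.
  intros Hq. induction N.
  - replace (Z.of_nat 0 - x0) with (- x0) by lia. rewrite Z.sub_diag. reflexivity.
  - rewrite rsum_seq_S, IHN.
    replace (Z.of_nat (1 + N) - x0) with ((Z.of_nat N - x0) + 1) by lia.
    replace (Z.of_nat (S N) - x0) with ((Z.of_nat N - x0) + 1) by lia.
    unfold dvd_ind. rewrite (div_succ _ _ Hq).
    destruct ((Z.of_nat N - x0 + 1) mod q =? 0); rewrite !minus_IZR, !plus_IZR; lra.
Qed.

Lemma count_dvd_shift_near q x0 N : 0 < q ->
  (Rabs (rsum (seq 1 N) (fun m => dvd_ind q (Z.of_nat m - x0)) - INR N / IZR q) <= 1)%R.
Proof.
  intros Hq. rewrite count_dvd_shift by auto.
  set (A := (Z.of_nat N - x0) / q). set (B := (- x0) / q).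
  pose proof (Z.div_mod (Z.of_nat N - x0) q ltac:(lia)).
  pose proof (Z.mod_pos_bound (Z.of_nat N - x0) q Hq).
  pose proof (Z.div_mod (- x0) q ltac:(lia)). pose proof (Z.mod_pos_bound (- x0) q Hq).
  fold A B in H, H1.
  assert (Hb : - q < q * (A - B) - Z.of_nat N < q) by lia.
  destruct Hb as [Hb1 Hb2]. apply IZR_lt in Hb1. apply IZR_lt in Hb2.
  rewrite minus_IZR, mult_IZR, minus_IZR, <- INR_IZR_INZ in Hb1, Hb2. rewrite opp_IZR in Hb1.
  assert (Hq' : (0 < IZR q)%R) by (apply IZR_lt; lia).
  rewrite minus_IZR. apply Rabs_le.
  split; apply Rmult_le_reg_r with (IZR q); auto; unfold Rdiv;
    rewrite Rmult_minus_distr_r, Rmult_assoc, Rinv_l by lra; nra.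
Qed.

Lemma count_dvd_affine_near q a c N : 0 < q -> Z.gcd a q = 1 ->
  (Rabs (rsum (seq 1 N) (fun m => dvd_ind q (a * Z.of_nat m + c)) - INR N / IZR q) <= 1)%R.
Proof.
  intros Hq Hg. destruct (extgcd a q) as [[u v] d] eqn:E. apply extgcd_correct in E.
  destruct E as [E1 E2]. rewrite Hg in E2. rewrite E2 in E1. clear E2.
  rewrite (rsum_ext _ _ (fun m => dvd_ind q (Z.of_nat m - (- c * u)))).
  { apply count_dvd_shift_near; auto. }
  intros m _. apply dvd_ind_iff; [lia|]. split; intros H.
  - replace (Z.of_nat m - - c * u) with (u * (a * Z.of_nat m + c) + (v * Z.of_nat m) * q)
      by (transitivity (Z.of_nat m * (u * a + v * q) + c * u); [ring | rewrite E1; ring]).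
    apply Z.divide_add_r; [apply Z.divide_mul_r; auto | apply Z.divide_mul_r, Z.divide_refl].
  - replace (a * Z.of_nat m + c) with (a * (Z.of_nat m - - c * u) + (c * v) * q)
      by (transitivity (a * Z.of_nat m + c * (u * a + v * q)); [ring | rewrite E1; ring]).
    apply Z.divide_add_r; [apply Z.divide_mul_r; auto | apply Z.divide_mul_r, Z.divide_refl].
Qed.

(* Entries beyond the shorter of [cs] and [n] are ignored. *)
Fixpoint lin (cs : list Z) (n : list nat) : Z :=
  match cs, n with a :: cs', m :: t => a * Z.of_nat m + lin cs' t | _, _ => 0 end.

Lemma box_count_dvd q N : 0 < q -> (1 <= N)%nat -> forall cs c,
  (exists i, (i < length cs)%nat /\ Z.gcd (nth i cs 0) q = 1) ->
  (Rabs (rbox (length cs) N (fun n => dvd_ind q (c + lin cs n)) - INR N ^ length cs / IZR q)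
    <= INR N ^ (length cs - 1))%R.
Proof.
  intros Hq HN. assert (Hq0 : IZR q <> 0%R) by (apply not_0_IZR; lia).
  induction cs as [|a cs IH]; intros c [i [Hi Hg]]; [simpl in Hi; lia|].
  simpl length. simpl rbox. replace (S (length cs) - 1)%nat with (length cs) by lia.
  destruct i as [|i].
  - simpl in Hg. rewrite <- rbox_rsum.
    replace (INR N ^ S (length cs) / IZR q)%R with (INR N ^ length cs * (INR N / IZR q))%R
      by (simpl; field; auto).
    replace (INR N ^ length cs)%R with (INR N ^ length cs * 1)%R at 2 by ring.
    apply rbox_near. intros t.
    rewrite (rsum_ext _ _ (fun m => dvd_ind q (a * Z.of_nat m + (c + lin cs t)))).
    + apply count_dvd_affine_near; auto.
    + intros m _. simpl. f_equal. lia.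
  - simpl in Hg, Hi.
    assert (H : forall m, In m (seq 1 N) ->
      (Rabs (rbox (length cs) N (fun t => dvd_ind q (c + lin (a :: cs) (m :: t)))
        - INR N ^ length cs / IZR q) <= INR N ^ (length cs - 1))%R).
    { intros m _. rewrite (rbox_ext _ _ _ (fun n => dvd_ind q ((c + a * Z.of_nat m) + lin cs n))).
      - apply IH. exists i; split; auto; lia.
      - intros n; simpl; f_equal; lia. }
    pose proof (rsum_near _ _ _ _ H) as R. rewrite length_seq in R.
    rewrite <- (pow_INR_pred N (length cs)) by lia.
    replace (INR N ^ S (length cs) / IZR q)%R with (INR N * (INR N ^ length cs / IZR q))%R
      by (simpl; field; auto).
    auto.
Qed.

Lemma row_pair_count q a a' c c' N : 0 < q -> Z.gcd a q = 1 ->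
  (rsum (seq 1 N) (fun m => dvd_ind q (a * Z.of_nat m + c) * dvd_ind q (a' * Z.of_nat m + c'))
    <= dvd_ind q (a * c' - a' * c) * (INR N / IZR q + 1))%R.
Proof.
  intros Hq Hg.
  eapply Rle_trans.
  - apply rsum_le with (G := fun m => (dvd_ind q (a * c' - a' * c) * dvd_ind q (a * Z.of_nat m + c))%R).
    intros m _. eapply Rle_trans; [apply dvd_ind_mul_le with (u := a) (v := a'); lia|].
    right. f_equal. f_equal. ring.
  - rewrite rsum_scal. pose proof (dvd_ind_range q (a * c' - a' * c)).
    pose proof (count_dvd_affine_near q a c N Hq Hg) as Hc. apply Rabs_le_between in Hc.
    apply Rmult_le_compat_l; lra.
Qed.

Fixpoint cross_coefs (a a' : Z) (r r' : list Z) : list Z :=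
  match r, r' with
  | x :: r1, y :: r1' => (a * y - a' * x) :: cross_coefs a a' r1 r1'
  | _, _ => nil
  end.

Lemma lin_cross_coefs a a' r r' t : length r = length r' ->
  lin (cross_coefs a a' r r') t = a * lin r' t - a' * lin r t.
Proof.
  revert r' t; induction r as [|x r IH]; intros [|y r'] t H; simpl in *; try lia.
  destruct t as [|m t]; simpl; [lia|]. rewrite IH by lia. ring.
Qed.

Lemma lin_zero cs n : (forall i, (i < length cs)%nat -> nth i cs 0 = 0) -> lin cs n = 0.
Proof.
  revert n; induction cs as [|x cs IH]; intros n H; simpl; auto.
  destruct n as [|m n]; auto.
  rewrite IH by (intros i Hi; apply (H (S i)); simpl; lia).
  pose proof (H 0%nat ltac:(simpl; lia)) as H0. simpl in H0. subst. lia.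
Qed.

Lemma cross_coefs_length a a' r r' : length r = length r' ->
  length (cross_coefs a a' r r') = length r.
Proof. revert r'; induction r; intros [|y r'] H; simpl in *; try lia. rewrite IHr; lia. Qed.

Lemma cross_coefs_nth a a' r r' s : length r = length r' -> (s < length r)%nat ->
  nth s (cross_coefs a a' r r') 0 = a * nth s r' 0 - a' * nth s r 0.
Proof.
  revert r' s; induction r; intros [|y r'] s H Hs; simpl in *; try lia.
  destruct s; auto. apply IHr; lia.
Qed.

Lemma coprime_of_prime p x : prime p -> ~ (p | x) -> Z.gcd x p = 1.
Proof. intros Hp Hx. apply Zgcd_1_rel_prime, rel_prime_sym, prime_rel_prime; auto. Qed.

Lemma coprime_sq_of_prime p x : prime p -> ~ (p | x) -> Z.gcd x (p * p) = 1.
Proof.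
  intros Hp Hx. apply Zgcd_1_rel_prime, rel_prime_mult; apply rel_prime_sym, prime_rel_prime; auto.
Qed.

Lemma not_dvd_of_coprime x p : 2 <= p -> Z.gcd x p = 1 -> ~ (p | x).
Proof.
  intros Hp Hg Hx. assert (H : (p | Z.gcd x p)) by (apply Z.gcd_greatest; auto; apply Z.divide_refl).
  rewrite Hg in H. apply Z.divide_pos_le in H; lia.
Qed.

Lemma first_col_row_le q N a a' r r' c c' t : 0 < q -> length r = length r' ->
  (Z.gcd a q = 1 \/ Z.gcd a' q = 1) ->
  (rsum (seq 1 N) (fun m => dvd_ind q (c + lin (a :: r) (m :: t))
                            * dvd_ind q (c' + lin (a' :: r') (m :: t)))
    <= dvd_ind q (a * c' - a' * c + lin (cross_coefs a a' r r') t) * (INR N / IZR q + 1))%R.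
Proof.
  intros Hq Hl Ha. rewrite lin_cross_coefs by auto.
  replace (a * c' - a' * c + (a * lin r' t - a' * lin r t))
    with (a * (c' + lin r' t) - a' * (c + lin r t)) by ring.
  rewrite (rsum_ext _ _ (fun m => dvd_ind q (a * Z.of_nat m + (c + lin r t))
                                  * dvd_ind q (a' * Z.of_nat m + (c' + lin r' t)))%R)
    by (intros m _; simpl; f_equal; f_equal; ring).
  destruct Ha as [Ha|Ha]; [apply row_pair_count; auto|].
  rewrite <- (dvd_ind_opp q) by lia.
  replace (- (a * (c' + lin r' t) - a' * (c + lin r t)))
    with (a' * (c + lin r t) - a * (c' + lin r' t)) by ring.
  rewrite (rsum_ext _ _ (fun m => dvd_ind q (a' * Z.of_nat m + (c' + lin r' t))
                                  * dvd_ind q (a * Z.of_nat m + (c + lin r t)))%R)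
    by (intros; ring).
  apply row_pair_count; auto.
Qed.

Lemma count_product_le (N K x s : R) : (1 <= N -> 1 <= K -> 0 < x <= 1/2 -> s <= N * K * x + K ->
  (N * x + 1) * s <= N * (N * K) * (x * x) + 3 * (N * K))%R.
Proof.
  intros HN HK Hx Hs.
  apply Rle_trans with ((N * x + 1) * (N * K * x + K))%R; [apply Rmult_le_compat_l; nra|].
  assert (0 <= N * K)%R by nra. assert (N * K * x <= N * K)%R by nra. assert (K <= N * K)%R by nra.
  nra.
Qed.

Lemma dvd_pair_first_col_le p N a a' r r' c c' : prime p -> (1 <= N)%nat -> length r = length r' ->
  (Z.gcd a p = 1 \/ Z.gcd a' p = 1) ->
  (exists s, (s < length r)%nat /\ Z.gcd (nth s (cross_coefs a a' r r') 0) p = 1) ->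
  (rbox (S (length r)) N (fun n => dvd_ind p (c + lin (a :: r) n) * dvd_ind p (c' + lin (a' :: r') n))
    <= INR N ^ S (length r) / IZR p ^ 2 + 3 * INR N ^ length r)%R.
Proof.
  intros Hp HN Hl Ha Hs. pose proof (prime_ge_2 _ Hp) as Hp2.
  assert (Hp0 : (2 <= IZR p)%R) by (apply IZR_le; lia).
  assert (Hr : (1 <= length r)%nat) by (destruct Hs as [s [Hs _]]; lia).
  set (F := fun t => (a * c' - a' * c) + lin (cross_coefs a a' r r') t).
  simpl rbox. rewrite <- rbox_rsum.
  eapply Rle_trans; [apply rbox_le; intros t; apply (first_col_row_le p N a a' r r' c c' t); auto; lia|].
  rewrite (rbox_ext _ _ _ (fun t => (INR N / IZR p + 1) * dvd_ind p (F t))%R) by (intros; unfold F; ring).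
  rewrite rbox_scal.
  assert (CB := box_count_dvd p N ltac:(lia) HN (cross_coefs a a' r r') (a * c' - a' * c)).
  rewrite cross_coefs_length in CB by auto. specialize (CB Hs).
  change (fun n => dvd_ind p (a * c' - a' * c + lin (cross_coefs a a' r r') n))
    with (fun t => dvd_ind p (F t)) in CB.
  apply Rabs_le_between in CB.
  assert (HN1 : (1 <= INR N)%R) by (apply (le_INR 1) in HN; simpl in HN; lra).
  assert (HK := pow_R1_Rle (INR N) (length r - 1) HN1).
  rewrite <- (pow_INR_pred N (length r)) in CB |- * by lia.
  replace (INR N ^ S (length r))%R with (INR N * (INR N * INR N ^ (length r - 1)))%R
    by (simpl; rewrite <- (pow_INR_pred N (length r)) by lia; ring).
  unfold Rdiv in *. replace (/ IZR p ^ 2)%R with (/ IZR p * / IZR p)%R by (field; lra).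
  apply count_product_le; auto; [|lra].
  split; [apply Rinv_0_lt_compat; lra|].
  replace (1/2)%R with (/2)%R by lra. apply Rinv_le_contravar; lra.
Qed.

Lemma box_count_dvd2 p N : prime p -> (1 <= N)%nat -> forall cs cs' c c', length cs = length cs' ->
  (exists i j, (i < length cs)%nat /\ (j < length cs)%nat /\
     Z.gcd (nth i cs 0 * nth j cs' 0 - nth j cs 0 * nth i cs' 0) p = 1) ->
  (rbox (length cs) N (fun n => dvd_ind p (c + lin cs n) * dvd_ind p (c' + lin cs' n))
    <= INR N ^ length cs / IZR p ^ 2 + 3 * INR N ^ (length cs - 1))%R.
Proof.
  intros Hp HN. pose proof (prime_ge_2 _ Hp) as Hp2.
  induction cs as [|a r IH]; intros cs' c c' Hl [i [j [Hi [Hj Hg]]]]; [simpl in Hi; lia|].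
  destruct cs' as [|a' r']; simpl in Hl; [lia|]. injection Hl as Hl.
  simpl length. replace (S (length r) - 1)%nat with (length r) by lia.
  assert (Hfirst : forall s, (s < length r)%nat ->
    Z.gcd (a * nth s r' 0 - a' * nth s r 0) p = 1 ->
    (rbox (S (length r)) N (fun n => dvd_ind p (c + lin (a :: r) n) * dvd_ind p (c' + lin (a' :: r') n))
      <= INR N ^ S (length r) / IZR p ^ 2 + 3 * INR N ^ length r)%R).
  { intros s Hs Hgs. apply dvd_pair_first_col_le; auto.
    - destruct (Zdivide_dec p a) as [Da|Da]; [destruct (Zdivide_dec p a') as [Da'|Da']|].
      + exfalso. apply (not_dvd_of_coprime _ p ltac:(lia) Hgs).
        apply Z.divide_sub_r; apply Z.divide_mul_l; auto.
      + right; apply coprime_of_prime; auto.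
      + left; apply coprime_of_prime; auto.
    - exists s. rewrite cross_coefs_nth by auto. auto. }
  destruct i as [|i], j as [|j]; simpl in Hg, Hi, Hj.
  - replace (a * a' - a * a') with 0 in Hg by ring. rewrite Z.gcd_0_l in Hg. lia.
  - apply (Hfirst j); [lia|]. rewrite <- Hg. f_equal. ring.
  - apply (Hfirst i); [lia|]. rewrite <- Hg, <- Z.gcd_opp_l. f_equal. ring.
  - simpl rbox. eapply Rle_trans.
    + apply rsum_le_const with (c := (INR N ^ length r / IZR p ^ 2 + 3 * INR N ^ (length r - 1))%R).
      intros m _.
      rewrite (rbox_ext _ _ _ (fun n => dvd_ind p ((c + a * Z.of_nat m) + lin r n)
                                       * dvd_ind p ((c' + a' * Z.of_nat m) + lin r' n))%R).
      * apply IH; auto. exists i, j; repeat split; auto; lia.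
      * intros n; simpl. f_equal; f_equal; lia.
    + rewrite length_seq.
      replace (INR N ^ S (length r))%R with (INR N * INR N ^ length r)%R by reflexivity.
      rewrite <- (pow_INR_pred N (length r)) by lia.
      assert (IZR p <> 0)%R by (apply not_0_IZR; lia).
      right. field. auto.
Qed.

Close Scope Z_scope.

(** * The forms of a primitive system *)

Lemma Z_divide_Nat d n : (d <> 0)%nat -> ((Z.of_nat d | Z.of_nat n)%Z <-> Nat.divide d n).
Proof.
  intros Hd. rewrite <- Z.mod_divide, <- Nat.Lcm0.mod_divide, <- Nat2Z.inj_mod by lia. lia.
Qed.

Definition coefs (a : nat -> nat -> nat) (j l : nat) : list Z :=
  map (fun r => Z.of_nat (a j r)) (seq 1 l).

Definition Lform (l : nat) (a : nat -> nat -> nat) (j : nat) (n : list nat) : Z :=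
  Z.of_nat (Leval l a j n).

Lemma skipn_cases s (n : list nat) :
  (skipn s n = nil /\ nth s n 0%nat = 0%nat /\ skipn (S s) n = nil) \/
  skipn s n = nth s n 0%nat :: skipn (S s) n.
Proof.
  revert s; induction n as [|x n IH]; intros s.
  - left. destruct s; simpl; auto.
  - destruct s; [right; reflexivity|]. simpl. apply IH.
Qed.

Lemma lin_nil cs : lin cs nil = 0%Z.
Proof. destruct cs; reflexivity. Qed.

Lemma sum_map_seq_lin A l : forall s n,
  Z.of_nat (fold_right Nat.add 0%nat (map (fun r => A r * nth (r - 1) n 0) (seq (S s) l))%nat) =
  lin (map (fun r => Z.of_nat (A r)) (seq (S s) l)) (skipn s n).
Proof.
  induction l as [|l IH]; intros s n; [reflexivity|].
  simpl seq. simpl map. simpl fold_right. rewrite Nat.sub_0_r, Nat2Z.inj_add, Nat2Z.inj_mul, IH.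
  destruct (skipn_cases s n) as [[A1 [A2 A3]]|A1]; rewrite A1.
  - rewrite A2, A3, !lin_nil. lia.
  - simpl. lia.
Qed.

Lemma Lform_lin l a j n : Lform l a j n = (Z.of_nat (a j 0%nat) + lin (coefs a j l) n)%Z.
Proof. unfold Lform, Leval, coefs. rewrite Nat2Z.inj_add. f_equal. apply (sum_map_seq_lin _ l 0 n). Qed.

Lemma coefs_length a j l : length (coefs a j l) = l.
Proof. unfold coefs. rewrite length_map, length_seq. auto. Qed.

Lemma coefs_nth a j l i : (i < l)%nat -> nth i (coefs a j l) 0%Z = Z.of_nat (a j (S i)).
Proof.
  intros H. unfold coefs. set (f := fun r => Z.of_nat (a j r)).
  rewrite (nth_indep _ _ (f 0%nat)) by (rewrite length_map, length_seq; auto).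
  rewrite map_nth, seq_nth by auto. reflexivity.
Qed.

Lemma dvd_fold_gcd (xs : list nat) d :
  (forall x, In x xs -> Nat.divide d x) -> Nat.divide d (fold_right Nat.gcd 0%nat xs).
Proof. induction xs; simpl; intros H; [apply Nat.divide_0_r|]. apply Nat.gcd_greatest; auto. Qed.

Lemma primitive_coef_nonzero (a : nat -> nat -> nat) j l :
  fold_right Nat.gcd 0%nat (map (a j) (seq 1 l)) = 1%nat ->
  exists r, (1 <= r <= l)%nat /\ a j r <> 0%nat.
Proof.
  intros H. apply NNPP. intros E.
  assert (D : Nat.divide 0 (fold_right Nat.gcd 0%nat (map (a j) (seq 1 l)))).
  { apply dvd_fold_gcd. intros x Hx. apply in_map_iff in Hx. destruct Hx as [r [<- Hr]].
    apply in_seq in Hr. destruct (Nat.eq_dec (a j r) 0) as [->|Hn]; [apply Nat.divide_0_r|].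
    exfalso; apply E. exists r; split; auto; lia. }
  rewrite H in D. destruct D as [z Hz]. lia.
Qed.

Lemma primitive_coef_not_dvd (a : nat -> nat -> nat) j l p :
  fold_right Nat.gcd 0%nat (map (a j) (seq 1 l)) = 1%nat ->
  prime (Z.of_nat p) -> exists i, (i < l)%nat /\ ~ (Z.of_nat p | nth i (coefs a j l) 0%Z)%Z.
Proof.
  intros H Hp. pose proof (prime_ge_2 _ Hp) as Hp2. apply NNPP. intros E.
  assert (D : Nat.divide p (fold_right Nat.gcd 0%nat (map (a j) (seq 1 l)))).
  { apply dvd_fold_gcd. intros x Hx. apply in_map_iff in Hx. destruct Hx as [r [<- Hr]].
    apply in_seq in Hr. apply Z_divide_Nat; [lia|]. apply NNPP. intros D. apply E.
    exists (r - 1)%nat. rewrite coefs_nth by lia. replace (S (r - 1)) with r by lia. split; auto; lia. }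
  rewrite H in D. apply Nat.divide_1_r in D. lia.
Qed.

Lemma form_count_dvd k l a j p N q : primitive_system k l a -> (j < k)%nat -> prime (Z.of_nat p) ->
  (0 < q)%Z -> (forall x, ~ (Z.of_nat p | x)%Z -> Z.gcd x q = 1%Z) -> (1 <= N)%nat ->
  Rabs (rbox l N (fun n => dvd_ind q (Lform l a j n)) - INR N ^ l / IZR q) <= INR N ^ (l - 1).
Proof.
  intros [Hg _] Hj Hp Hq Hcop HN.
  destruct (primitive_coef_not_dvd a j l p (Hg j Hj) Hp) as [i [Hi Hd]].
  rewrite (rbox_ext _ _ _ (fun n => dvd_ind q (Z.of_nat (a j 0%nat) + lin (coefs a j l) n)))
    by (intros n; rewrite Lform_lin; auto).
  pose proof (box_count_dvd q N Hq HN (coefs a j l) (Z.of_nat (a j 0%nat))) as C.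
  rewrite coefs_length in C. apply C. exists i. auto.
Qed.

Definition coef_bound (k l : nat) (a : nat -> nat -> nat) : nat :=
  fold_right Nat.add 0%nat
    (map (fun j => fold_right Nat.add 0%nat (map (a j) (seq 0 (S l)))) (seq 0 k)).

Lemma le_fold_add x xs : In x xs -> (x <= fold_right Nat.add 0 xs)%nat.
Proof.
  induction xs; simpl; intros H; [contradiction|].
  destruct H; [subst; lia | specialize (IHxs H); lia].
Qed.

Lemma coef_le_bound k l a j r : (j < k)%nat -> (r <= l)%nat -> (a j r <= coef_bound k l a)%nat.
Proof.
  intros Hj Hr. unfold coef_bound. eapply Nat.le_trans; [|apply le_fold_add].
  2: { apply in_map_iff. exists j. split; [reflexivity | apply in_seq; lia]. }
  apply le_fold_add, in_map, in_seq. lia.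
Qed.

(* Every 2x2 minor of the coefficient matrix is smaller than p in absolute value. *)
Lemma minor_eq_of_dvd k l a j j' x y z w p : (j < k)%nat -> (j' < k)%nat ->
  (x <= l)%nat -> (y <= l)%nat -> (z <= l)%nat -> (w <= l)%nat ->
  (coef_bound k l a * coef_bound k l a < p)%nat ->
  (Z.of_nat p | Z.of_nat (a j x) * Z.of_nat (a j' y) - Z.of_nat (a j z) * Z.of_nat (a j' w))%Z ->
  (a j x * a j' y = a j z * a j' w)%nat.
Proof.
  intros Hj Hj' Hx Hy Hz Hw Hp [c Hc].
  pose proof (coef_le_bound k l a j x Hj Hx). pose proof (coef_le_bound k l a j' y Hj' Hy).
  pose proof (coef_le_bound k l a j z Hj Hz). pose proof (coef_le_bound k l a j' w Hj' Hw).
  destruct (Z.eq_dec c 0) as [->|Hc0]; [lia|]. exfalso. nia.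
Qed.

(* Independence of [L_j] and [L_j'] forbids the constant column from being proportional too. *)
Lemma independent_minor_neq k l a j j' r0 : primitive_system k l a ->
  (j < k)%nat -> (j' < k)%nat -> j <> j' -> a j r0 <> 0%nat ->
  (forall r, (1 <= r <= l)%nat -> a j' r0 * a j r = a j r0 * a j' r)%nat ->
  (a j r0 * a j' 0 <> a j' r0 * a j 0)%nat.
Proof.
  intros [_ Hind] Hj Hj' Hjj Hr0 Hprop HM.
  destruct (Hind j j' Hj Hj' Hjj (INR (a j' r0)) (- INR (a j r0))) as [_ D].
  - intros r Hr. rewrite <- Ropp_mult_distr_l, <- !mult_INR.
    destruct r as [|r]; [rewrite HM, Nat.mul_comm; lra|].
    rewrite Hprop by lia. lra.
  - apply Hr0, INR_eq. simpl. lra.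
Qed.

Lemma forms_dvd_disjoint k l a j j' p : primitive_system k l a ->
  (j < k)%nat -> (j' < k)%nat -> j <> j' -> prime (Z.of_nat p) ->
  (coef_bound k l a * coef_bound k l a < p)%nat ->
  (forall i i', (i < l)%nat -> (i' < l)%nat ->
     (Z.of_nat p | Z.of_nat (a j (S i)) * Z.of_nat (a j' (S i'))
                   - Z.of_nat (a j (S i')) * Z.of_nat (a j' (S i)))%Z) ->
  forall n, dvd_ind (Z.of_nat p) (Lform l a j n) * dvd_ind (Z.of_nat p) (Lform l a j' n) = 0.
Proof.
  intros Hsys Hj Hj' Hjj Hp Hbig Hdvd n. pose proof (prime_ge_2 _ Hp) as Hp2.
  assert (Hprop : forall r r', (1 <= r <= l)%nat -> (1 <= r' <= l)%nat ->
    (a j r * a j' r' = a j r' * a j' r)%nat).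
  { intros r r' Hr Hr'. apply (minor_eq_of_dvd k l a j j' _ _ _ _ p); auto; try lia.
    replace r with (S (r - 1)) by lia. replace r' with (S (r' - 1)) by lia. apply Hdvd; lia. }
  destruct (primitive_coef_nonzero a j l (proj1 Hsys j Hj)) as [r0 [Hr0 Har0]].
  set (M := (Z.of_nat (a j r0) * Z.of_nat (a j' 0%nat) - Z.of_nat (a j' r0) * Z.of_nat (a j 0%nat))%Z).
  assert (HM : ~ (Z.of_nat p | M)%Z).
  { intros D. apply (independent_minor_neq k l a j j' r0); auto.
    - intros r Hr. rewrite (Nat.mul_comm (a j' r0)). apply Hprop; lia.
    - rewrite (Nat.mul_comm (a j' r0)).
      apply (minor_eq_of_dvd k l a j j' _ _ _ _ p); auto; try lia.
      unfold M in D. replace (Z.of_nat (a j 0%nat) * Z.of_nat (a j' r0))%Z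
        with (Z.of_nat (a j' r0) * Z.of_nat (a j 0%nat))%Z by ring. auto. }
  assert (Hcomb : (Z.of_nat (a j r0) * Lform l a j' n - Z.of_nat (a j' r0) * Lform l a j n)%Z = M).
  { rewrite !Lform_lin.
    assert (Z0 : lin (cross_coefs (Z.of_nat (a j r0)) (Z.of_nat (a j' r0)) (coefs a j l) (coefs a j' l)) n
                 = 0%Z).
    { apply lin_zero. intros i Hi.
      rewrite cross_coefs_length, coefs_length in Hi by (rewrite !coefs_length; auto).
      rewrite cross_coefs_nth, !coefs_nth by (rewrite ?coefs_length; auto).
      rewrite <- !Nat2Z.inj_mul, Hprop by lia. lia. }
    rewrite lin_cross_coefs in Z0 by (rewrite !coefs_length; auto). unfold M. lia. }
  pose proof (dvd_ind_mul_le (Z.of_nat p) (Lform l a j n) (Lform l a j' n)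
                (Z.of_nat (a j r0)) (Z.of_nat (a j' r0)) ltac:(lia)) as B.
  rewrite Hcomb in B.
  destruct (dvd_ind_cases (Z.of_nat p) M ltac:(lia)) as [[_ D]|[D0 _]]; [contradiction|].
  rewrite D0 in B. pose proof (dvd_ind_range (Z.of_nat p) (Lform l a j n)).
  pose proof (dvd_ind_range (Z.of_nat p) (Lform l a j' n)). nra.
Qed.

Lemma forms_count_dvd2 k l a j j' p N : primitive_system k l a ->
  (j < k)%nat -> (j' < k)%nat -> j <> j' -> prime (Z.of_nat p) ->
  (coef_bound k l a * coef_bound k l a < p)%nat -> (1 <= N)%nat ->
  rbox l N (fun n => dvd_ind (Z.of_nat p) (Lform l a j n) * dvd_ind (Z.of_nat p) (Lform l a j' n))
    <= INR N ^ l / IZR (Z.of_nat p) ^ 2 + 3 * INR N ^ (l - 1).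
Proof.
  intros Hsys Hj Hj' Hjj Hp Hbig HN. pose proof (prime_ge_2 _ Hp) as Hp2.
  set (P := Z.of_nat p).
  destruct (classic (exists i i', (i < l)%nat /\ (i' < l)%nat /\
    ~ (P | nth i (coefs a j l) 0 * nth i' (coefs a j' l) 0
           - nth i' (coefs a j l) 0 * nth i (coefs a j' l) 0)%Z)) as [[i [i' [Hi [Hi' Hd]]]]|E].
  - rewrite (rbox_ext _ _ _ (fun n => dvd_ind P (Z.of_nat (a j 0%nat) + lin (coefs a j l) n)
                                    * dvd_ind P (Z.of_nat (a j' 0%nat) + lin (coefs a j' l) n)))
      by (intros n; rewrite !Lform_lin; auto).
    pose proof (box_count_dvd2 P N Hp HN (coefs a j l) (coefs a j' l)
                  (Z.of_nat (a j 0%nat)) (Z.of_nat (a j' 0%nat))) as C.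
    rewrite !coefs_length in C. apply C; auto.
    exists i, i'. repeat split; auto. apply coprime_of_prime; auto.
  - rewrite (rbox_ext _ _ _ (fun _ => 0)).
    + rewrite rbox_const. assert (0 < IZR P) by (apply IZR_lt; lia).
      pose proof (pow_le (INR N) l (pos_INR N)). pose proof (pow_le (INR N) (l - 1) (pos_INR N)).
      assert (0 <= INR N ^ l / IZR P ^ 2) by (apply Rdiv_le_0_compat; [lra | apply pow_lt; lra]).
      lra.
    + apply (forms_dvd_disjoint k l a j j' p); auto.
      intros i i' Hi Hi'. apply NNPP. intros D. apply E. exists i, i'.
      rewrite !coefs_nth by auto. auto.
Qed.

(** * Euler factors *)

Lemma ex_series_geom_bound (w : nat -> R) (q c : R) : 0 <= q < 1 ->
  (forall m, Rabs (w m) <= c * q ^ m) -> ex_series w.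
Proof.
  intros Hq H. apply (@ex_series_le R_AbsRing R_CompleteNormedModule) with (b := fun m => c * q ^ m).
  - intros m. apply H.
  - assert (E : ex_series (fun m => q ^ m * c))
      by (apply ex_series_scal_r, ex_series_geom; rewrite Rabs_pos_eq; lra).
    eapply ex_series_ext; [|exact E]. intros m; simpl; ring.
Qed.

Lemma Series_geom_S q : 0 <= q < 1 -> Series (fun m => q ^ S m) = q / (1 - q).
Proof.
  intros Hq. rewrite (Series_ext _ (fun m => q * q ^ m)) by reflexivity.
  rewrite Series_scal_l, Series_geom by (rewrite Rabs_pos_eq; lra). field. lra.
Qed.

Lemma rsum_geom_tail q m0 n : 0 <= q < 1 ->
  rsum (seq m0 n) (fun m => q ^ S m) <= q ^ S m0 / (1 - q).
Proof.
  intros Hq. assert (E : rsum (seq m0 n) (fun m => q ^ S m) * (1 - q) = q ^ S m0 - q ^ S (m0 + n)).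
  { induction n; [simpl; rewrite Nat.add_0_r; ring|].
    rewrite rsum_seq_S, Rmult_plus_distr_r, IHn, Nat.add_succ_r. simpl. ring. }
  pose proof (pow_le q (S (m0 + n)) ltac:(lra)).
  apply Rmult_le_reg_r with (1 - q); [lra|]. rewrite E. unfold Rdiv.
  rewrite Rmult_assoc, Rinv_l by lra. lra.
Qed.

Lemma Rabs_lim_le (s : nat -> R) (L K : R) M0 : is_lim_seq s L ->
  (forall M, (M0 <= M)%nat -> Rabs (s M) <= K) -> Rabs L <= K.
Proof.
  intros Hs H.
  assert (U : Rbar_le (Finite L) (Finite K)).
  { apply (is_lim_seq_le_loc s (fun _ => K)); auto; [|apply is_lim_seq_const].
    exists M0; intros n Hn; specialize (H n Hn); apply Rabs_le_between in H; lra. }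
  assert (D : Rbar_le (Finite (- K)) (Finite L)).
  { apply (is_lim_seq_le_loc (fun _ => - K) s); auto; [|apply is_lim_seq_const].
    exists M0; intros n Hn; specialize (H n Hn); apply Rabs_le_between in H; lra. }
  simpl in U, D. apply Rabs_le; lra.
Qed.

Lemma series_tail_bound (w : nat -> R) q m0 : 0 <= q < 1 ->
  (forall m, Rabs (w m) <= 2 * q ^ S m) ->
  Rabs (Series w - rsum (seq 0 m0) w) <= 2 * q ^ S m0 / (1 - q).
Proof.
  intros Hq Hw.
  assert (Hex : ex_series w).
  { apply ex_series_geom_bound with (q := q) (c := 2 * q). auto.
    intros m. rewrite (Rmult_assoc 2 q). apply Hw. }
  apply Rabs_lim_le with (s := fun M => sum_n w M - rsum (seq 0 m0) w) (M0 := m0).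
  - apply is_lim_seq_minus'; [apply Series_correct; auto | apply is_lim_seq_const].
  - intros M HM. rewrite sum_n_rsum.
    replace (S M) with (m0 + (S M - m0))%nat by lia. rewrite seq_app, rsum_app.
    replace (rsum (seq 0 m0) w + rsum (seq (0 + m0) (S M - m0)) w - rsum (seq 0 m0) w)
      with (rsum (seq m0 (S M - m0)) w) by (simpl; ring).
    eapply Rle_trans; [apply Rabs_rsum|].
    eapply Rle_trans; [apply rsum_le with (G := fun m => 2 * q ^ S m); auto|].
    rewrite rsum_scal. unfold Rdiv. rewrite Rmult_assoc.
    apply Rmult_le_compat_l; [lra | apply rsum_geom_tail; auto].
Qed.

Definition euler_factor (f : nat -> C) (p : nat) : C :=
  Cmult (RtoC (1 - / INR p))
    (Cplus (RtoC 1) (CSeries (fun m => Cmult (f (p ^ (S m))%nat) (RtoC (/ INR (p ^ (S m))%nat))))).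

Lemma Pfrak_euler_factor f X : Pfrak f X = prod_primes 0 X (euler_factor f).
Proof. reflexivity. Qed.

Section EulerFactor.

Variables (f : nat -> C) (p : nat).
Hypothesis Hp : (2 <= p)%nat.
Hypothesis Hf : forall m, Cmod (f (p ^ S m)%nat) <= 1.

Let q := / INR p.

Lemma inv_prime_range : 0 < q <= 1/2.
Proof.
  unfold q. assert (2 <= INR p) by (apply (le_INR 2) in Hp; simpl in Hp; lra).
  split; [apply Rinv_0_lt_compat; lra|]. replace (1/2) with (/2) by lra. apply Rinv_le_contravar; lra.
Qed.

Let w m := ((f (p ^ S m)%nat - 1) * RtoC (q ^ S m))%C.

Lemma Cmod_w m : Cmod (w m) <= 2 * q ^ S m.
Proof.
  pose proof inv_prime_range as Hq. unfold w.
  rewrite Cmod_mult, Cmod_R, Rabs_pos_eq by (apply pow_le; lra).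
  apply Rmult_le_compat_r; [apply pow_le; lra | apply Cmod_sub1_le, Hf].
Qed.

Lemma euler_factor_as_series : euler_factor f p = (1 + RtoC (1 - q) * CSeries w)%C.
Proof.
  pose proof inv_prime_range as Hq.
  assert (Ex : forall g : nat -> R, (forall m, Rabs (g m) <= Cmod (w m)) -> ex_series g).
  { intros g Hg. apply ex_series_geom_bound with (q := q) (c := 2 * q); [lra|]. intros m.
    eapply Rle_trans; [apply Hg|]. eapply Rle_trans; [apply Cmod_w | simpl; lra]. }
  assert (Hgeo : ex_series (fun m => q ^ S m)).
  { apply ex_series_geom_bound with (q := q) (c := q); [lra|]. intros m.
    rewrite Rabs_pos_eq by (apply pow_le; lra). simpl; lra. }
  assert (E : forall m, (f (p ^ S m)%nat * RtoC (/ INR (p ^ S m)%nat) = w m + RtoC (q ^ S m))%C).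
  { intros m. unfold w, q. rewrite pow_INR, <- pow_inv. ring. }
  assert (S1 : Series (fun m => fst (f (p ^ S m)%nat * RtoC (/ INR (p ^ S m)%nat))%C)
               = Series (fun m => fst (w m)) + q / (1 - q)).
  { rewrite (Series_ext _ (fun m => fst (w m) + q ^ S m)) by (intros m; rewrite E; reflexivity).
    rewrite Series_plus, Series_geom_S by (auto; try lra; apply Ex; intros; apply re_le_Cmod).
    reflexivity. }
  assert (S2 : Series (fun m => snd (f (p ^ S m)%nat * RtoC (/ INR (p ^ S m)%nat))%C)
               = Series (fun m => snd (w m))).
  { apply Series_ext. intros m. rewrite E. simpl. ring. }
  unfold euler_factor, CSeries. rewrite S1, S2. fold q.
  apply injective_projections; simpl; field; lra.
Qed.

Lemma euler_factor_expansion m0 :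
  Cmod (euler_factor f p - 1 - RtoC (1 - q) * csum (seq 0 m0) w)%C <= 4 * q ^ S m0.
Proof.
  pose proof inv_prime_range as Hq. pose proof Cmod_w as Hw.
  rewrite euler_factor_as_series.
  replace (1 + RtoC (1 - q) * CSeries w - 1 - RtoC (1 - q) * csum (seq 0 m0) w)%C
    with (RtoC (1 - q) * (CSeries w - csum (seq 0 m0) w))%C by ring.
  rewrite Cmod_RtoC_mul by lra.
  eapply Rle_trans; [apply Rmult_le_compat_l; [lra | apply Cmod_le_re_im]|].
  assert (Ere : fst (CSeries w - csum (seq 0 m0) w)%C
                = Series (fun m => fst (w m)) - rsum (seq 0 m0) (fun m => fst (w m)))
    by (rewrite <- csum_fst; reflexivity).
  assert (Eim : snd (CSeries w - csum (seq 0 m0) w)%C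
                = Series (fun m => snd (w m)) - rsum (seq 0 m0) (fun m => snd (w m)))
    by (rewrite <- csum_snd; reflexivity).
  rewrite Ere, Eim.
  assert (B1 := series_tail_bound (fun m => fst (w m)) q m0 ltac:(lra)
                  (fun m => Rle_trans _ _ _ (re_le_Cmod _) (Hw m))).
  assert (B2 := series_tail_bound (fun m => snd (w m)) q m0 ltac:(lra)
                  (fun m => Rle_trans _ _ _ (im_le_Cmod _) (Hw m))).
  assert (E : (1 - q) * (2 * q ^ S m0 / (1 - q)) = 2 * q ^ S m0) by (field; lra).
  nra.
Qed.

Lemma euler_factor_sub1 : Cmod (euler_factor f p - 1)%C <= 4 * q.
Proof.
  pose proof (euler_factor_expansion 0) as E. simpl csum in E.
  replace (euler_factor f p - 1 - RtoC (1 - q) * RtoC 0)%C with (euler_factor f p - 1)%C in E by ring.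
  simpl in E. rewrite Rmult_1_r in E. exact E.
Qed.

End EulerFactor.

(** * The local factor M_p *)

Lemma vp_aux_spec p : (2 <= p)%nat -> forall fuel n, (1 <= n <= fuel)%nat ->
  Nat.divide (p ^ vp_aux p fuel n) n /\ ~ Nat.divide (p ^ S (vp_aux p fuel n)) n.
Proof.
  intros Hp fuel. induction fuel as [|fu IH]; intros n Hn; [lia|].
  simpl vp_aux. assert (E1 : Nat.ltb 1 p = true) by (apply Nat.ltb_lt; lia).
  assert (E2 : Nat.eqb n 0 = false) by (apply Nat.eqb_neq; lia). rewrite E1, E2. simpl andb.
  destruct (Nat.eqb_spec (n mod p) 0) as [Hm|Hm].
  - pose proof (Nat.div_mod_eq n p) as Hd. rewrite Hm, Nat.add_0_r in Hd.
    assert (Hq1 : (1 <= n / p)%nat) by (destruct (n / p)%nat eqn:E; lia).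
    assert (Hq2 : (n / p < n)%nat) by (apply Nat.div_lt; lia).
    destruct (IH (n / p)%nat ltac:(lia)) as [A B].
    set (v := vp_aux p fu (n / p)) in *. rewrite Hd. split.
    + simpl. apply Nat.mul_divide_mono_l. auto.
    + intros C. apply B. simpl in C. apply Nat.mul_divide_cancel_l in C; auto. lia.
  - split; [simpl; apply Nat.divide_1_l|]. intros C. apply Hm. simpl in C.
    rewrite Nat.mul_1_r in C. apply Nat.Lcm0.mod_divide. auto.
Qed.

Lemma vp_spec p n : (2 <= p)%nat -> (1 <= n)%nat ->
  Nat.divide (p ^ vp p n) n /\ ~ Nat.divide (p ^ S (vp p n)) n.
Proof. intros; apply vp_aux_spec; auto. Qed.

Lemma vp_eq0 p n : (2 <= p)%nat -> ~ Nat.divide p n -> vp p n = 0%nat.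
Proof.
  intros Hp Hn. assert (n <> 0)%nat by (intros ->; apply Hn, Nat.divide_0_r).
  destruct (vp_spec p n Hp ltac:(lia)) as [D _]. destruct (vp p n) as [|v]; auto.
  exfalso. apply Hn. eapply Nat.divide_trans; [|exact D]. exists (p ^ v)%nat. simpl. lia.
Qed.

Lemma vp_eq1 p n : (2 <= p)%nat -> Nat.divide p n -> ~ Nat.divide (p * p) n -> vp p n = 1%nat.
Proof.
  intros Hp H1 H2. assert (n <> 0)%nat by (intros ->; apply H2, Nat.divide_0_r).
  destruct (vp_spec p n Hp ltac:(lia)) as [D1 D2]. destruct (vp p n) as [|[|v]]; auto.
  - exfalso. apply D2. simpl. rewrite Nat.mul_1_r. auto.
  - exfalso. apply H2. eapply Nat.divide_trans; [|exact D1]. exists (p ^ v)%nat. simpl. lia.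
Qed.

(* The local value [F (p ^ vp p L)] is [1] unless [p | L], and is [F p] unless [p^2 | L]. *)
Lemma local_value_expansion (F : nat -> C) p L : (2 <= p)%nat -> F 1%nat = 1 ->
  (forall m, (1 <= m)%nat -> Cmod (F m) <= 1) ->
  Cmod (F (p ^ vp p L)%nat - 1 - (F p - 1)
          * RtoC (dvd_ind (Z.of_nat p) (Z.of_nat L) - dvd_ind (Z.of_nat p * Z.of_nat p) (Z.of_nat L)))%C
     <= 2 * dvd_ind (Z.of_nat p * Z.of_nat p) (Z.of_nat L) /\
  Cmod (F (p ^ vp p L)%nat - 1)%C <= 2 * dvd_ind (Z.of_nat p) (Z.of_nat L).
Proof.
  intros Hp F1 Fb.
  assert (Fm : forall m, (1 <= m)%nat -> Cmod (F m - 1)%C <= 2) by (intros; apply Cmod_sub1_le, Fb; auto).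
  assert (Hpp : (1 <= p ^ vp p L)%nat) by (pose proof (Nat.pow_nonzero p (vp p L)); lia).
  rewrite <- Nat2Z.inj_mul.
  destruct (dvd_ind_cases (Z.of_nat p) (Z.of_nat L) ltac:(lia)) as [[A1 A2]|[A1 A2]];
  destruct (dvd_ind_cases (Z.of_nat (p * p)) (Z.of_nat L) ltac:(lia)) as [[B1 B2]|[B1 B2]];
  rewrite A1, B1; rewrite Z_divide_Nat in A2 by lia; rewrite Z_divide_Nat in B2 by lia.
  - replace (1 - 1)%R with 0%R by ring.
    replace (F (p ^ vp p L)%nat - 1 - (F p - 1) * RtoC 0)%C with (F (p ^ vp p L)%nat - 1)%C by ring.
    rewrite Rmult_1_r. split; apply Fm; auto.
  - rewrite vp_eq1 by auto. simpl Nat.pow. rewrite Nat.mul_1_r. replace (1 - 0)%R with 1%R by ring.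
    replace (F p - 1 - (F p - 1) * RtoC 1)%C with (RtoC 0) by ring. rewrite Cmod_0.
    rewrite Rmult_1_r. split; [lra | apply Fm; lia].
  - exfalso. apply A2. eapply Nat.divide_trans; [apply Nat.divide_factor_l | exact B2].
  - rewrite vp_eq0 by auto.
    simpl Nat.pow. rewrite F1. replace (0 - 0)%R with 0%R by ring.
    replace (1 - 1 - (F p - 1) * RtoC 0)%C with (RtoC 0) by ring.
    replace (1 - 1)%C with (RtoC 0) by ring. rewrite Cmod_0. lra.
Qed.

Lemma mean_near_of_count N l (X c : R) : (1 <= N)%nat -> (1 <= l)%nat ->
  Rabs (X - INR N ^ l * c) <= INR N ^ (l - 1) -> Rabs (/ INR N ^ l * X - c) <= / INR N.
Proof.
  intros HN Hl H. assert (HN1 : 1 <= INR N) by (apply (le_INR 1) in HN; simpl in HN; lra).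
  assert (E : INR N ^ l = INR N * INR N ^ (l - 1)) by (rewrite pow_INR_pred; auto).
  assert (Hp : 0 < INR N ^ (l - 1)) by (apply pow_lt; lra).
  assert (Hi : 0 < / INR N ^ l) by (apply Rinv_0_lt_compat, pow_lt; lra).
  replace (/ INR N ^ l * X - c) with (/ INR N ^ l * (X - INR N ^ l * c)) by (field; apply pow_nonzero; lra).
  rewrite Rabs_mult, Rabs_pos_eq by lra.
  eapply Rle_trans; [apply Rmult_le_compat_l; [lra | exact H]|].
  rewrite E. right. field. lra.
Qed.

Lemma primitive_system_vars k l a : primitive_system k l a -> (0 < k)%nat -> (1 <= l)%nat.
Proof.
  intros [Hg _] Hk. destruct l; [|lia].
  specialize (Hg 0%nat Hk). simpl in Hg. lia.
Qed.

Definition local_const (k : nat) : R := 30 * 3 ^ k * (INR k + 1) ^ 2.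

Lemma local_const_nonneg k : 0 <= local_const k.
Proof. unfold local_const. pose proof (pow_le 3 k ltac:(lra)). pose proof (pos_INR k). nra. Qed.

Lemma local_const_dominates k x y : 0 <= x -> 0 <= y ->
  INR k * (6 * x ^ 2 + 6 * y) + 4 * 3 ^ k * INR k ^ 2 * (x ^ 2 + 3 * y) + 3 ^ k * (INR k ^ 2 * (4 * x) ^ 2)
    <= local_const k * (x ^ 2 + y).
Proof.
  intros Hx Hy. unfold local_const.
  set (K := INR k). set (T := 3 ^ k).
  assert (HT : 1 <= T) by (apply pow_R1_Rle; lra). assert (HK : 0 <= K) by apply pos_INR.
  assert (Hx2 : 0 <= x ^ 2) by apply pow2_ge_0.
  assert (C1 : 6 * K + 20 * T * K ^ 2 <= 30 * T * (K + 1) ^ 2) by nra.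
  assert (C2 : 6 * K + 12 * T * K ^ 2 <= 30 * T * (K + 1) ^ 2) by nra.
  assert (E1 : (6 * K + 20 * T * K ^ 2) * x ^ 2 <= 30 * T * (K + 1) ^ 2 * x ^ 2)
    by (apply Rmult_le_compat_r; auto).
  assert (E2 : (6 * K + 12 * T * K ^ 2) * y <= 30 * T * (K + 1) ^ 2 * y)
    by (apply Rmult_le_compat_r; auto).
  assert (K * (6 * x ^ 2 + 6 * y) + 4 * T * K ^ 2 * (x ^ 2 + 3 * y) + T * (K ^ 2 * (4 * x) ^ 2)
          = (6 * K + 20 * T * K ^ 2) * x ^ 2 + (6 * K + 12 * T * K ^ 2) * y) by ring.
  lra.
Qed.

Section LocalDensity.

Variables (k l : nat) (a : nat -> nat -> nat) (f : nat -> nat -> C) (p : nat).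
Hypothesis Hsys : primitive_system k l a.
Hypothesis Hp : prime (Z.of_nat p).
Hypothesis Hbig : (coef_bound k l a * coef_bound k l a < p)%nat.
Hypothesis Hf : forall j, (j < k)%nat -> one_bounded (f j) /\ multiplicative (f j).

Let P := Z.of_nat p.
Let q := / INR p.

Lemma prime_nat_ge_2 : (2 <= p)%nat.
Proof. pose proof (prime_ge_2 _ Hp). lia. Qed.

Lemma f_prime_powers_bounded j m : (j < k)%nat -> Cmod (f j (p ^ S m)%nat) <= 1.
Proof.
  intros Hj. apply (proj1 (Hf j Hj)).
  pose proof (Nat.pow_nonzero p (S m)). pose proof prime_nat_ge_2. lia.
Qed.

Let local_dev (j : nat) (n : list nat) : C := (floc (f j) p (Leval l a j n) - 1)%C.

Lemma Cmod_local_dev j n : (j < k)%nat -> Cmod (local_dev j n) <= 2 * dvd_ind P (Lform l a j n).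
Proof.
  intros Hj. destruct (Hf j Hj) as [Hb [F1 _]].
  apply (local_value_expansion (f j) p (Leval l a j n) prime_nat_ge_2 F1 Hb).
Qed.

Lemma mean_dvd_near j N d : (j < k)%nat -> (1 <= N)%nat -> (0 < d)%Z ->
  (forall x, ~ (P | x)%Z -> Z.gcd x d = 1%Z) ->
  Rabs (/ INR N ^ l * rbox l N (fun n => dvd_ind d (Lform l a j n)) - / IZR d) <= / INR N.
Proof.
  intros Hj HN Hd Hcop.
  assert (Hl : (1 <= l)%nat) by (apply (primitive_system_vars k l a); auto; lia).
  apply mean_near_of_count; auto.
  replace (INR N ^ l * / IZR d) with (INR N ^ l / IZR d) by reflexivity.
  apply (form_count_dvd k l a j p); auto.
Qed.

(* Only [p | L_j(n)] (density [1/p]) and [p^2 | L_j(n)] (density [1/p^2]) matter to this order. *)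
Lemma mean_local_dev j N : (j < k)%nat -> (1 <= N)%nat ->
  Cmod (RtoC (/ INR N ^ l) * box_sum l N (local_dev j) - (euler_factor (f j) p - 1))%C
    <= 6 * q ^ 2 + 6 * / INR N.
Proof.
  intros Hj HN. destruct (Hf j Hj) as [Hb [F1 _]]. pose proof prime_nat_ge_2 as Hp2.
  pose proof (inv_prime_range p Hp2) as Hq. fold q in Hq.
  set (dP := fun n => dvd_ind P (Lform l a j n)).
  set (dPP := fun n => dvd_ind (P * P) (Lform l a j n)).
  set (fp1 := (f j p - 1)%C).
  set (T := fun n => (local_dev j n - fp1 * RtoC (dP n - dPP n))%C).
  assert (HT : forall n, Cmod (T n) <= 2 * dPP n)
    by (intros n; apply (local_value_expansion (f j) p (Leval l a j n) Hp2 F1 Hb)).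
  assert (Hfp1 : Cmod fp1 <= 2) by (apply Cmod_sub1_le, Hb; lia).
  rewrite (box_sum_ext _ _ _ (fun n => fp1 * RtoC (dP n - dPP n) + T n)%C) by (intros; unfold T; ring).
  rewrite box_sum_plus, box_sum_scal, box_sum_RtoC, rbox_minus.
  assert (HPR : IZR P = INR p) by (unfold P; rewrite INR_IZR_INZ; auto).
  assert (C1 := mean_dvd_near j N P Hj HN ltac:(unfold P; lia) (fun x Hx => coprime_of_prime _ _ Hp Hx)).
  assert (C2 := mean_dvd_near j N (P * P) Hj HN ltac:(unfold P; lia)
                  (fun x Hx => coprime_sq_of_prime _ _ Hp Hx)).
  fold dP in C1. fold dPP in C2. rewrite HPR in C1. rewrite mult_IZR, HPR in C2. fold q in C1.
  replace (/ (INR p * INR p)) with (q ^ 2) in C2 by (unfold q; field; apply not_0_INR; lia).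
  pose proof (euler_factor_expansion (f j) p Hp2 (fun m => f_prime_powers_bounded j m Hj) 1) as PB.
  fold q in PB. simpl csum in PB. rewrite Nat.mul_1_r in PB. fold fp1 in PB.
  set (err := (euler_factor (f j) p - 1 - RtoC (1 - q) * (fp1 * RtoC (q ^ 1) + 0))%C) in PB.
  set (X := rbox l N dP) in *. set (Y := rbox l N dPP) in *. set (BN := / INR N ^ l) in *.
  assert (HBN : 0 < BN) by (apply Rinv_0_lt_compat, pow_lt, (lt_INR 0); lia).
  replace (RtoC BN * (fp1 * RtoC (X - Y) + box_sum l N T) - (euler_factor (f j) p - 1))%C with
    (fp1 * RtoC (BN * X - q - (BN * Y - q ^ 2)) + RtoC BN * box_sum l N T - err)%C
    by (unfold err; apply injective_projections; simpl; ring).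
  eapply Rle_trans; [apply Cmod_sub_le|].
  eapply Rle_trans; [apply Rplus_le_compat_r, Cmod_triangle|].
  rewrite Cmod_mult, Cmod_R, Cmod_RtoC_mul by lra.
  assert (B1 : Cmod fp1 * Rabs (BN * X - q - (BN * Y - q ^ 2)) <= 2 * (2 * / INR N)).
  { apply Rmult_le_compat; auto; [apply Cmod_ge_0 | apply Rabs_pos|].
    eapply Rle_trans; [unfold Rminus at 1; apply Rabs_triang|]. rewrite Rabs_Ropp. lra. }
  assert (B2 : BN * Cmod (box_sum l N T) <= 2 * (q ^ 2 + / INR N)).
  { eapply Rle_trans; [apply Rmult_le_compat_l; [lra | apply Cmod_box_sum]|].
    eapply Rle_trans;
      [apply Rmult_le_compat_l; [lra | apply rbox_le with (G := fun n => 2 * dPP n); auto]|].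
    rewrite rbox_scal. fold Y. apply Rabs_le_between in C2. nra. }
  assert (Herr : Cmod err <= 4 * q ^ 2) by (unfold err; replace (q ^ 1) with (q * 1) by ring; exact PB).
  lra.
Qed.

Lemma Cmod_local_second_order n :
  Cmod (cprod (seq 0 k) (fun j => 1 + local_dev j n) - 1 - csum (seq 0 k) (fun j => local_dev j n))%C
    <= 3 ^ k * (2 ^ 2 * pair_sum (seq 0 k) (fun j => dvd_ind P (Lform l a j n))).
Proof.
  eapply Rle_trans.
  - apply Cmod_cprod_second_order. intros j Hj. apply in_seq in Hj.
    eapply Rle_trans; [apply Cmod_local_dev; lia|].
    pose proof (dvd_ind_range P (Lform l a j n)). lra.
  - rewrite length_seq. apply Rmult_le_compat_l; [apply pow_le; lra|].
    rewrite <- pair_sum_scal. apply pair_sum_le. intros j Hj. apply in_seq in Hj.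
    split; [apply Cmod_ge_0 | apply Cmod_local_dev; lia].
Qed.

Lemma box_pair_sum_dvd_le N : (1 <= N)%nat ->
  rbox l N (fun n => pair_sum (seq 0 k) (fun j => dvd_ind P (Lform l a j n)))
    <= INR k ^ 2 * (INR N ^ l / IZR P ^ 2 + 3 * INR N ^ (l - 1)).
Proof.
  intros HN. pose proof prime_nat_ge_2.
  assert (0 < IZR P) by (apply IZR_lt; unfold P; lia).
  assert (0 <= INR N ^ l / IZR P ^ 2)
    by (apply Rdiv_le_0_compat; [apply pow_le, pos_INR | apply pow_lt; lra]).
  pose proof (pow_le (INR N) (l - 1) (pos_INR N)).
  replace (INR k) with (INR (length (seq 0 k))) by (rewrite length_seq; auto).
  apply rbox_pair_sum_le; [apply seq_NoDup | lra|].
  intros i j Hi Hj Hij. apply in_seq in Hi. apply in_seq in Hj.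
  apply forms_count_dvd2 with k; auto; lia.
Qed.

Lemma mean_second_order N : (1 <= N)%nat ->
  Cmod (RtoC (/ INR N ^ l) * box_sum l N (fun n => cprod (seq 0 k) (fun j => 1 + local_dev j n)
           - 1 - csum (seq 0 k) (fun j => local_dev j n)))%C
    <= 4 * 3 ^ k * INR k ^ 2 * (q ^ 2 + 3 * / INR N).
Proof.
  intros HN. pose proof prime_nat_ge_2 as Hp2.
  destruct (Nat.eq_dec k 0) as [Hk0|Hk0].
  { rewrite Hk0. simpl. replace (RtoC (/ INR N ^ l) * box_sum l N (fun _ => 1 - 1 - 0))%C with (RtoC 0).
    - rewrite Cmod_0. simpl. lra.
    - rewrite (box_sum_ext _ _ _ (fun _ => RtoC 0)), box_sum_const by (intros; ring). ring. }
  assert (Hl : (1 <= l)%nat) by (apply (primitive_system_vars k l a); auto; lia).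
  assert (HN1 : 1 <= INR N) by (apply (le_INR 1) in HN; simpl in HN; lra).
  assert (HBN : 0 < / INR N ^ l) by (apply Rinv_0_lt_compat, pow_lt; lra).
  rewrite Cmod_RtoC_mul by lra.
  eapply Rle_trans; [apply Rmult_le_compat_l; [lra | apply Cmod_box_sum]|].
  eapply Rle_trans; [apply Rmult_le_compat_l; [lra | apply rbox_le, Cmod_local_second_order]|].
  rewrite !rbox_scal. pose proof (pow_le 3 k ltac:(lra)).
  eapply Rle_trans; [repeat (apply Rmult_le_compat_l; [lra|]); apply box_pair_sum_dvd_le; auto|].
  right. unfold P, q. rewrite <- INR_IZR_INZ, <- (pow_INR_pred N l) by auto. field.
  repeat split; try (apply Rgt_not_eq; lra); try (apply not_0_INR; lia); apply pow_nonzero; lra.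
Qed.

Lemma local_mean_near N : (1 <= N)%nat ->
  Cmod (RtoC (/ INR N ^ l) * box_sum l N (fun n => cprod (seq 0 k) (fun j => floc (f j) p (Leval l a j n)))
        - cprod (seq 0 k) (fun j => euler_factor (f j) p))%C <= local_const k * (q ^ 2 + / INR N).
Proof.
  intros HN. pose proof prime_nat_ge_2 as Hp2.
  pose proof (inv_prime_range p Hp2) as Hq. fold q in Hq.
  assert (HN1 : 1 <= INR N) by (apply (le_INR 1) in HN; simpl in HN; lra).
  set (e := fun j => (euler_factor (f j) p - 1)%C).
  rewrite (box_sum_ext _ _ _ (fun n => cprod (seq 0 k) (fun j => 1 + local_dev j n)%C))
    by (intros n; apply cprod_ext; intros; unfold local_dev; ring).
  rewrite (cprod_ext _ _ (fun j => 1 + e j)%C) by (intros; unfold e; ring).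
  rewrite box_mean_cprod_expand by lra.
  assert (B1 : Cmod (csum (seq 0 k) (fun j => RtoC (/ INR N ^ l) * box_sum l N (local_dev j) - e j)%C)
               <= INR k * (6 * q ^ 2 + 6 * / INR N)).
  { eapply Rle_trans; [apply Cmod_csum|].
    replace (INR k) with (INR (length (seq 0 k))) by (rewrite length_seq; auto). apply rsum_le_const.
    intros j Hj. apply in_seq in Hj. apply mean_local_dev; auto; lia. }
  assert (B2 := mean_second_order N HN).
  assert (He : forall j, (j < k)%nat -> Cmod (e j) <= 4 * q)
    by (intros j Hj; unfold e, q; apply euler_factor_sub1;
        [exact Hp2 | intros m; apply f_prime_powers_bounded; auto]).
  assert (B3 : Cmod (cprod (seq 0 k) (fun j => 1 + e j) - 1 - csum (seq 0 k) e)%C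
               <= 3 ^ k * (INR k ^ 2 * (4 * q) ^ 2)).
  { eapply Rle_trans.
    - apply Cmod_cprod_second_order. intros j Hj. apply in_seq in Hj. specialize (He j ltac:(lia)). lra.
    - rewrite length_seq. apply Rmult_le_compat_l; [apply pow_le; lra|].
      eapply Rle_trans.
      + apply pair_sum_le with (g' := fun _ => 4 * q).
        intros j Hj. apply in_seq in Hj. split; [apply Cmod_ge_0 | apply He; lia].
      + replace (INR k) with (INR (length (seq 0 k))) by (rewrite length_seq; auto).
        apply pair_sum_le_const. intros; lra. }
  eapply Rle_trans; [apply Cmod_sub_le|].
  eapply Rle_trans; [apply Rplus_le_compat_r, Cmod_triangle|].
  eapply Rle_trans; [|apply local_const_dominates; [lra | apply Rlt_le, Rinv_0_lt_compat; lra]]. lra.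
Qed.

End LocalDensity.

Lemma is_lim_seq_add_inv (D c : R) : is_lim_seq (fun n => c + D * / INR n) c.
Proof.
  assert (H : is_lim_seq (fun n => c + D * / INR n) (c + D * 0)).
  { apply is_lim_seq_plus'; [apply is_lim_seq_const|]. apply is_lim_seq_mult'; [apply is_lim_seq_const|].
    replace (Finite 0) with (Rbar_inv p_infty) by reflexivity.
    apply is_lim_seq_inv; [apply is_lim_seq_INR | discriminate]. }
  rewrite Rmult_0_r, Rplus_0_r in H. exact H.
Qed.

Lemma real_Lim_seq_near (u : nat -> R) c b D :
  (forall n, (1 <= n)%nat -> Rabs (u n - c) <= b + D * / INR n) -> Rabs (real (Lim_seq u) - c) <= b.
Proof.
  intros H.
  assert (U : Rbar_le (Lim_seq u) (c + b)).
  { rewrite <- (is_lim_seq_unique _ _ (is_lim_seq_add_inv D (c + b))). apply Lim_seq_le_loc.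
    exists 1%nat. intros n Hn. specialize (H n Hn). apply Rabs_le_between in H. lra. }
  assert (L : Rbar_le (c - b) (Lim_seq u)).
  { rewrite <- (is_lim_seq_unique _ _ (is_lim_seq_add_inv (- D) (c - b))). apply Lim_seq_le_loc.
    exists 1%nat. intros n Hn. specialize (H n Hn). apply Rabs_le_between in H. lra. }
  destruct (Lim_seq u) as [r| |]; simpl in U, L |- *; try contradiction. apply Rabs_le; lra.
Qed.

(* [Mp] is a limit over real [x]; along the integers it is the mean over the box [[1, N]^l]. *)
Lemma Mp_near_mean k l f a p Q b D :
  (forall N, (1 <= N)%nat ->
     Cmod (RtoC (/ INR N ^ l) * box_sum l N (fun n => cprod (seq 0 k) (fun j => floc (f j) p (Leval l a j n)))
           - Q)%C
       <= b + D * / INR N) ->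
  Cmod (Mp k l f a p - Q)%C <= 2 * b.
Proof.
  intros H. set (G := fun n => cprod (seq 0 k) (fun j => floc (f j) p (Leval l a j n))) in *.
  set (E := fun N : nat => (RtoC (/ INR N ^ l) * box_sum l N G)%C).
  assert (HM : Mp k l f a p = (real (Lim_seq (fun N => fst (E N))), real (Lim_seq (fun N => snd (E N))))).
  { unfold Mp, Clim_pinfty, Lim. f_equal; f_equal; apply Lim_seq_ext; intros N; simpl Rbar_loc_seq;
      rewrite Int_part_INR, Nat2Z.id; reflexivity. }
  rewrite HM. eapply Rle_trans; [apply Cmod_le_re_im|].
  set (X1 := real (Lim_seq (fun N => fst (E N)))). set (X2 := real (Lim_seq (fun N => snd (E N)))).
  replace (fst ((X1, X2) - Q)%C) with (X1 - fst Q) by (simpl; ring).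
  replace (snd ((X1, X2) - Q)%C) with (X2 - snd Q) by (simpl; ring).
  assert (R1 : Rabs (X1 - fst Q) <= b).
  { apply real_Lim_seq_near with D. intros n Hn. eapply Rle_trans; [|exact (H n Hn)].
    replace (fst (E n) - fst Q) with (fst (E n - Q)%C) by (simpl; ring). apply re_le_Cmod. }
  assert (R2 : Rabs (X2 - snd Q) <= b).
  { apply real_Lim_seq_near with D. intros n Hn. eapply Rle_trans; [|exact (H n Hn)].
    replace (snd (E n) - snd Q) with (snd (E n - Q)%C) by (simpl; ring). apply im_le_Cmod. }
  lra.
Qed.

Lemma Mp_near_euler k l a f p : primitive_system k l a -> prime (Z.of_nat p) ->
  (coef_bound k l a * coef_bound k l a < p)%nat ->
  (forall j, (j < k)%nat -> one_bounded (f j) /\ multiplicative (f j)) ->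
  Cmod (Mp k l f a p - cprod (seq 0 k) (fun j => euler_factor (f j) p))%C
    <= 2 * (local_const k * (/ INR p) ^ 2).
Proof.
  intros. apply Mp_near_mean with (D := local_const k). intros N HN.
  eapply Rle_trans; [apply local_mean_near; auto | right; ring].
Qed.

Definition nat_floor (y : R) : nat := Z.to_nat (Int_part y).

Lemma nat_floor_spec y : 0 <= y -> INR (nat_floor y) <= y < INR (nat_floor y) + 1.
Proof.
  intros Hy. destruct (base_Int_part y) as [A B].
  assert (H0 : (-1 < Int_part y)%Z) by (apply lt_IZR; lra).
  unfold nat_floor. rewrite INR_IZR_INZ, Z2Nat.id by lia. lra.
Qed.

Lemma rsum_inv_sq_gt_nat m M : (1 <= m)%nat ->
  rsum (seq 0 M) (fun p => if Nat.ltb m p then / INR p ^ 2 else 0) <= / INR m.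
Proof.
  intros Hm. assert (Hm' : 1 <= INR m) by (apply (le_INR 1) in Hm; simpl in Hm; lra).
  enough (E : rsum (seq 0 M) (fun p => if Nat.ltb m p then / INR p ^ 2 else 0)
              <= / INR m - / INR (Nat.max (M - 1) m)).
  { assert (0 < / INR (Nat.max (M - 1) m)) by (apply Rinv_0_lt_compat, lt_0_INR; lia). lra. }
  induction M; [simpl; replace (Nat.max 0 m) with m by lia; lra|].
  rewrite rsum_seq_S. simpl Nat.add. destruct (Nat.ltb_spec m M).
  - replace (Nat.max (S M - 1) m) with M by lia.
    replace (Nat.max (M - 1) m) with (M - 1)%nat in IHM by lia.
    rewrite minus_INR in IHM by lia. simpl INR in IHM.
    assert (HM : INR m + 1 <= INR M) by (rewrite <- S_INR; apply le_INR; lia).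
    assert (/ INR M ^ 2 <= / (INR M - 1) - / INR M).
    { replace (/ (INR M - 1) - / INR M) with (/ (INR M * (INR M - 1))) by (field; lra).
      apply Rinv_le_contravar; [nra | simpl; nra]. }
    lra.
  - replace (Nat.max (S M - 1) m) with m by lia. replace (Nat.max (M - 1) m) with m in IHM by lia. lra.
Qed.

Lemma rsum_inv_sq_gt y M : 2 <= y ->
  rsum (seq 0 M) (fun p => if Rlt_dec y (INR p) then / INR p ^ 2 else 0) <= 2 / y.
Proof.
  intros Hy. destruct (nat_floor_spec y ltac:(lra)) as [F1 F2]. set (m := nat_floor y) in *.
  assert (Hm : (1 <= m)%nat) by (destruct m; [simpl in F2; lra | lia]).
  eapply Rle_trans.
  - apply rsum_le with (G := fun p => if Nat.ltb m p then / INR p ^ 2 else 0).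
    intros p _. destruct (Rlt_dec y (INR p)), (Nat.ltb_spec m p).
    + lra.
    + exfalso. apply le_INR in H. lra.
    + apply Rlt_le, Rinv_0_lt_compat, pow_lt, lt_0_INR; lia.
    + lra.
  - eapply Rle_trans; [apply rsum_inv_sq_gt_nat; auto|].
    assert (1 <= INR m) by (apply (le_INR 1) in Hm; simpl in Hm; lra).
    replace (2 / y) with (/ (y / 2)) by (field; lra). apply Rinv_le_contravar; lra.
Qed.

Lemma rsum_indicator_le m M c : 0 <= c ->
  rsum (seq 0 M) (fun p => if Nat.leb p m then c else 0) <= INR (S m) * c.
Proof.
  intros Hc.
  assert (H : rsum (seq 0 M) (fun p => if Nat.leb p m then c else 0) = INR (Nat.min M (S m)) * c).
  { induction M; [simpl; lra|]. rewrite rsum_seq_S, IHM. simpl Nat.add.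
    destruct (Nat.leb_spec M m).
    - replace (Nat.min (S M) (S m)) with (S (Nat.min M (S m))) by lia. rewrite S_INR. lra.
    - replace (Nat.min (S M) (S m)) with (Nat.min M (S m)) by lia. lra. }
  rewrite H. apply Rmult_le_compat_r; auto. apply le_INR. lia.
Qed.

(* A prime [p <= y] contributes [min (1/y) (1/p^2)]: splitting at [sqrt y] bounds the total. *)
Lemma rsum_min_inv_sq y M g : 4 <= y ->
  (forall p, 0 <= g p <= Rmin (/ y) (/ INR p ^ 2)) -> rsum (seq 0 M) g <= 4 / sqrt y.
Proof.
  intros Hy Hg. set (s := sqrt y).
  assert (Hs2 : 2 <= s).
  { unfold s. rewrite <- (sqrt_square 2) by lra. apply sqrt_le_1_alt. lra. }
  assert (Hss : s * s = y) by (unfold s; apply sqrt_sqrt; lra).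
  destruct (nat_floor_spec s ltac:(lra)) as [F1 F2]. set (m := nat_floor s) in *.
  assert (Hm : (1 <= m)%nat) by (destruct m; [simpl in F2; lra | lia]).
  assert (Hm1 : 1 <= INR m) by (apply (le_INR 1) in Hm; simpl in Hm; lra).
  eapply Rle_trans.
  - apply rsum_le with (G := fun p => (if Nat.leb p m then / y else 0)
                                   + (if Nat.ltb m p then / INR p ^ 2 else 0)).
    intros p _. specialize (Hg p). pose proof (Rmin_l (/ y) (/ INR p ^ 2)).
    pose proof (Rmin_r (/ y) (/ INR p ^ 2)).
    destruct (Nat.leb_spec p m), (Nat.ltb_spec m p); lia || lra.
  - rewrite rsum_plus.
    assert (Hy0 : 0 < / y) by (apply Rinv_0_lt_compat; lra).
    pose proof (rsum_indicator_le m M (/ y) ltac:(lra)) as C1. pose proof (rsum_inv_sq_gt_nat m M Hm) as C2.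
    rewrite S_INR in C1.
    assert (E1 : (INR m + 1) * / y <= 2 / s).
    { replace (2 / s) with ((2 * s) * / y) by (rewrite <- Hss; field; lra). apply Rmult_le_compat_r; lra. }
    assert (E2 : / INR m <= 2 / s).
    { replace (2 / s) with (/ (s / 2)) by (field; lra). apply Rinv_le_contravar; lra. }
    replace (4 / s) with (2 / s + 2 / s) by (field; lra). lra.
Qed.

Lemma ln_le_2sqrt y : 1 <= y -> ln y <= 2 * sqrt y.
Proof.
  intros Hy. assert (Hs : 0 < sqrt y) by (apply sqrt_lt_R0; lra).
  rewrite <- (sqrt_sqrt y) at 1 by lra. rewrite ln_mult by auto.
  pose proof (exp_ineq1_le (ln (sqrt y))). rewrite exp_ln in H by auto. lra.
Qed.

Lemma exists_pow_bracket (p : nat) (y : R) : (2 <= p)%nat -> 1 <= y ->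
  exists m0, INR (p ^ m0) <= y < INR (p ^ S m0).
Proof.
  intros Hp Hy.
  assert (G : forall n, y < INR (p ^ n) -> exists m0, INR (p ^ m0) <= y < INR (p ^ S m0)).
  { induction n; intros H; [simpl in H; lra|].
    destruct (Rlt_le_dec y (INR (p ^ n))); [apply IHn; auto | exists n; split; auto]. }
  destruct (archimed y) as [A _].
  assert (H0 : (0 <= up y)%Z) by (apply le_IZR; lra).
  apply (G (Z.to_nat (up y))).
  assert (Hz : (Z.to_nat (up y) <= p ^ Z.to_nat (up y))%nat).
  { clear - Hp. induction (Z.to_nat (up y)); simpl; [lia|].
    pose proof (Nat.pow_nonzero p n). nia. }
  apply le_INR in Hz. rewrite INR_IZR_INZ, Z2Nat.id in Hz by auto. lra.
Qed.

Lemma euler_factor_small_prime f p y : (2 <= p)%nat -> 1 <= y -> INR p <= y ->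
  (forall m, Cmod (f (p ^ S m)%nat) <= 1) ->
  (forall mu, (1 <= mu)%nat -> INR (p ^ mu) <= y -> f (p ^ mu)%nat = RtoC 1) ->
  Cmod (euler_factor f p - 1)%C <= 4 * Rmin (/ y) (/ INR p ^ 2).
Proof.
  intros Hp Hy Hpy Hb H1.
  destruct (exists_pow_bracket p y Hp Hy) as [m0 [M1 M2]].
  assert (Hm0 : (1 <= m0)%nat) by (destruct m0; [simpl in M2; rewrite Nat.mul_1_r in M2; lra | lia]).
  pose proof (euler_factor_expansion f p Hp Hb m0) as PB.
  rewrite (csum_ext _ _ (fun _ => RtoC 0)), csum_const in PB.
  2: { intros m Hm. apply in_seq in Hm. rewrite H1; [ring | lia|].
       eapply Rle_trans; [|exact M1]. apply le_INR, Nat.pow_le_mono_r; lia. }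
  replace (euler_factor f p - 1 - RtoC (1 - / INR p) * (RtoC (INR (length (seq 0 m0))) * RtoC 0))%C
    with (euler_factor f p - 1)%C in PB by ring.
  eapply Rle_trans; [exact PB|]. apply Rmult_le_compat_l; [lra|].
  pose proof (inv_prime_range p Hp) as Hq. set (q := / INR p) in *.
  assert (E : q ^ S m0 = / INR (p ^ S m0)) by (unfold q; rewrite pow_INR, pow_inv; auto).
  apply Rmin_glb.
  - rewrite E. apply Rlt_le, Rinv_lt_contravar; [apply Rmult_lt_0_compat|]; lra.
  - replace (S m0) with (2 + (m0 - 1))%nat by lia. rewrite pow_add.
    replace (/ INR p ^ 2) with (q ^ 2) by (unfold q; rewrite pow_inv; auto).
    assert (q ^ (m0 - 1) <= 1) by (rewrite <- (pow1 (m0 - 1)); apply pow_incr; lra).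
    pose proof (pow2_ge_0 q). nra.
Qed.

Definition prime_factor_in (lo hi : R) (F : nat -> C) (p : nat) : C :=
  if prime_dec (Z.of_nat p) then
    if Rlt_dec lo (INR p) then if Rle_dec (INR p) hi then F p else RtoC 1 else RtoC 1
  else RtoC 1.

Lemma prod_primes_seq lo hi F M : 0 <= hi -> (Z.to_nat (up hi) <= M)%nat ->
  prod_primes lo hi F = cprod (seq 0 M) (prime_factor_in lo hi F).
Proof.
  intros Hh HM. unfold prod_primes. fold (prime_factor_in lo hi F).
  replace M with (Z.to_nat (up hi) + (M - Z.to_nat (up hi)))%nat by lia.
  rewrite seq_app, cprod_app, (cprod_ext (seq (0 + Z.to_nat (up hi)) _) _ (fun _ => RtoC 1)).
  { rewrite cprod_one. ring. }
  intros p Hp. apply in_seq in Hp. unfold prime_factor_in.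
  destruct (prime_dec _); [destruct (Rlt_dec _ _); [destruct (Rle_dec _ _)|]|]; auto.
  exfalso. destruct (archimed hi) as [A _].
  assert (H0 : (0 <= up hi)%Z) by (apply le_IZR; lra).
  assert (INR (Z.to_nat (up hi)) <= INR p) by (apply le_INR; lia).
  rewrite INR_IZR_INZ, Z2Nat.id in H by auto. lra.
Qed.

Lemma prime_factor_in_cprod s lo hi F p :
  cprod s (fun j => prime_factor_in lo hi (F j) p)
  = prime_factor_in lo hi (fun p => cprod s (fun j => F j p)) p.
Proof.
  unfold prime_factor_in.
  destruct (prime_dec _); [destruct (Rlt_dec _ _); [destruct (Rle_dec _ _)|]|]; auto; apply cprod_one.
Qed.

Lemma prime_factor_in_mul lo hi F G p :
  prime_factor_in lo hi (fun p => F p * G p)%C p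
  = (prime_factor_in lo hi F p * prime_factor_in lo hi G p)%C.
Proof.
  unfold prime_factor_in.
  destruct (prime_dec _); [destruct (Rlt_dec _ _); [destruct (Rle_dec _ _)|]|]; auto; ring.
Qed.

Lemma prime_factor_in_split y X F p : 0 <= y -> y <= X ->
  prime_factor_in 0 X F p = (prime_factor_in 0 y F p * prime_factor_in y X F p)%C.
Proof.
  intros H0 H. unfold prime_factor_in. pose proof (pos_INR p).
  destruct (prime_dec _); [|ring].
  destruct (Rlt_dec 0 (INR p)), (Rle_dec (INR p) X), (Rlt_dec y (INR p)), (Rle_dec (INR p) y);
    try ring; exfalso; lra.
Qed.

Lemma Cmod_prime_factor_in_sub1 lo hi F p c : 0 <= c ->
  (prime (Z.of_nat p) -> lo < INR p -> INR p <= hi -> Cmod (F p - 1)%C <= c) ->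
  Cmod (prime_factor_in lo hi F p - 1)%C
    <= (if Rlt_dec lo (INR p) then if Rle_dec (INR p) hi then c else 0 else 0).
Proof.
  intros Hc H. unfold prime_factor_in.
  destruct (prime_dec _), (Rlt_dec lo (INR p)), (Rle_dec (INR p) hi); auto;
    replace (RtoC 1 - 1)%C with (RtoC 0) by ring; rewrite Cmod_0; lra.
Qed.

Lemma inv_sq_nonneg (x : R) : 0 <= / x ^ 2.
Proof.
  destruct (Req_dec x 0) as [->|Hx]; [simpl; rewrite Rmult_0_l, Rinv_0; lra|].
  apply Rlt_le, Rinv_0_lt_compat. simpl. rewrite Rmult_1_r. nra.
Qed.

Definition threshold (k l : nat) (a : nat -> nat -> nat) : R :=
  16 + 16 * local_const k + INR (coef_bound k l a * coef_bound k l a) + (128 * INR k) ^ 2.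

Section MainEstimate.

Variables (k l : nat) (a : nat -> nat -> nat) (f : nat -> nat -> C) (y X : R).
Hypothesis Hsys : primitive_system k l a.
Hypothesis Hy : threshold k l a <= y.
Hypothesis HyX : y <= X.
Hypothesis Hf : forall j, (j < k)%nat ->
  one_bounded (f j) /\ multiplicative (f j) /\
  (forall p mu, is_prime_nat p -> (1 <= mu)%nat -> INR (p ^ mu) <= y -> f j (p ^ mu)%nat = RtoC 1).

Let D := local_const k.
Let Q (p : nat) : C := cprod (seq 0 k) (fun j => euler_factor (f j) p).
Let MP := Mp k l f a.
Let M := Z.to_nat (up X).

Lemma threshold_bounds :
  16 <= y /\ 16 * D <= y /\ INR (coef_bound k l a * coef_bound k l a) <= y /\ (128 * INR k) ^ 2 <= y.
Proof.
  unfold threshold in Hy. pose proof (local_const_nonneg k).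
  pose proof (pos_INR (coef_bound k l a * coef_bound k l a)).
  pose proof (pow2_ge_0 (128 * INR k)). unfold D. lra.
Qed.

Lemma small_k : 16 * INR k <= y.
Proof.
  destruct threshold_bounds as [H16 [_ [_ Hk]]]. pose proof (pos_INR k).
  destruct (Rle_lt_dec 1 (INR k)); [|lra].
  assert (INR k <= INR k * INR k) by nra.
  replace ((128 * INR k) ^ 2) with (16384 * (INR k * INR k)) in Hk by ring. lra.
Qed.

Lemma f_prime_pow_bounded j p m : (j < k)%nat -> (1 <= p)%nat -> Cmod (f j (p ^ S m)%nat) <= 1.
Proof. intros Hj Hp. apply (proj1 (Hf j Hj)). pose proof (Nat.pow_nonzero p (S m)). lia. Qed.

Lemma euler_prod_large_prime p : prime (Z.of_nat p) -> y < INR p -> Cmod (Q p - 1)%C <= 1/2.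
Proof.
  intros Hp Hyp. pose proof (prime_ge_2 _ Hp). pose proof small_k.
  destruct threshold_bounds as [H16 _].
  assert (HpR : 0 < INR p) by lra.
  eapply Rle_trans.
  - apply Cmod_cprod_sub1_const with (c := 4 * / INR p).
    + intros j Hj. apply euler_factor_sub1; [lia|]. intros m. apply f_prime_pow_bounded; auto; lia.
    + apply Rmult_le_reg_r with (INR p); auto. rewrite Rmult_assoc, Rmult_assoc, Rinv_l by lra. lra.
  - apply Rmult_le_reg_r with (INR p); auto. rewrite !Rmult_assoc, Rinv_l by lra. lra.
Qed.

Lemma Mp_ratio_large_prime p : prime (Z.of_nat p) -> y < INR p ->
  Cmod (MP p / Q p - 1)%C <= 4 * D * / INR p ^ 2.
Proof.
  intros Hp Hyp. pose proof (prime_ge_2 _ Hp). destruct threshold_bounds as [H16 [_ [HA _]]].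
  assert (HpR : 0 < INR p) by lra.
  assert (HQ : 1/2 <= Cmod (Q p)) by (apply Cmod_ge_half, euler_prod_large_prime; auto).
  assert (HQ0 : Q p <> RtoC 0) by (intros E; rewrite E, Cmod_0 in HQ; lra).
  assert (HM := Mp_near_euler k l a f p Hsys Hp ltac:(apply INR_lt; lra)
                  (fun j Hj => conj (proj1 (Hf j Hj)) (proj1 (proj2 (Hf j Hj))))).
  fold D MP in HM. fold (Q p) in HM.
  replace (MP p / Q p - 1)%C with ((MP p - Q p) / Q p)%C by (field; auto).
  rewrite Cmod_div by auto. apply Rmult_le_reg_r with (Cmod (Q p)); [lra|].
  unfold Rdiv. rewrite Rmult_assoc, Rinv_l, Rmult_1_r by lra.
  rewrite pow_inv in HM. assert (HD0 : 0 <= D) by apply local_const_nonneg.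
  assert (0 <= D * / INR p ^ 2) by (apply Rmult_le_pos; [auto | apply inv_sq_nonneg]).
  nra.
Qed.

Lemma large_primes_ratio :
  Cmod (cprod (seq 0 M) (prime_factor_in y X (fun p => MP p / Q p)%C) - 1)%C <= 16 * D / y.
Proof.
  destruct threshold_bounds as [H16 [HD _]]. assert (HD0 : 0 <= D) by apply local_const_nonneg.
  assert (S : rsum (seq 0 M) (fun p => Cmod (prime_factor_in y X (fun p => MP p / Q p)%C p - 1)%C)
              <= 8 * D / y).
  { eapply Rle_trans.
    - apply rsum_le with (G := fun p => 4 * D * (if Rlt_dec y (INR p) then / INR p ^ 2 else 0)).
      intros p _. eapply Rle_trans.
      + apply Cmod_prime_factor_in_sub1 with (c := 4 * D * / INR p ^ 2).
        * apply Rmult_le_pos; [lra | apply inv_sq_nonneg].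
        * intros Hp Hyp _. apply Mp_ratio_large_prime; auto.
      + destruct (Rlt_dec y (INR p)); [destruct (Rle_dec (INR p) X)|]; try lra.
        assert (0 < / INR p ^ 2) by (apply Rinv_0_lt_compat, pow_lt; lra). nra.
    - rewrite rsum_scal. replace (8 * D / y) with (4 * D * (2 / y)) by (field; lra).
      apply Rmult_le_compat_l; [lra | apply rsum_inv_sq_gt; lra]. }
  eapply Rle_trans; [apply Cmod_cprod_sub1|].
  - eapply Rle_trans; [exact S|]. apply Rmult_le_reg_r with y; [lra|].
    unfold Rdiv. rewrite Rmult_assoc, Rinv_l by lra. lra.
  - replace (16 * D / y) with (2 * (8 * D / y)) by (field; lra). lra.
Qed.

Lemma small_primes_euler :
  Cmod (cprod (seq 0 M) (prime_factor_in 0 y Q) - 1)%C <= 64 * INR k / sqrt y.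
Proof.
  destruct threshold_bounds as [H16 [_ [_ Hk]]]. pose proof small_k. pose proof (pos_INR k).
  assert (Hs : 0 < sqrt y) by (apply sqrt_lt_R0; lra).
  assert (Hsk : 128 * INR k <= sqrt y)
    by (rewrite <- (sqrt_square (128 * INR k)) by lra; apply sqrt_le_1_alt; lra).
  set (g := fun p : nat => if Rlt_dec 0 (INR p) then if Rle_dec (INR p) y
                           then Rmin (/ y) (/ INR p ^ 2) else 0 else 0).
  assert (Hg : forall p, 0 <= g p <= Rmin (/ y) (/ INR p ^ 2)).
  { intros p. assert (0 <= Rmin (/ y) (/ INR p ^ 2)).
    { apply Rmin_glb; [apply Rlt_le, Rinv_0_lt_compat; lra | apply inv_sq_nonneg]. }
    unfold g. destruct (Rlt_dec 0 (INR p)); [destruct (Rle_dec (INR p) y)|]; lra. }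
  assert (S : rsum (seq 0 M) (fun p => Cmod (prime_factor_in 0 y Q p - 1)%C) <= 32 * INR k / sqrt y).
  { eapply Rle_trans.
    - apply rsum_le with (G := fun p => 8 * INR k * g p). intros p _.
      eapply Rle_trans; [apply Cmod_prime_factor_in_sub1 with (c := 8 * INR k * Rmin (/ y) (/ INR p ^ 2))|].
      + specialize (Hg p). pose proof (Rle_trans _ _ _ (proj1 Hg) (proj2 Hg)). nra.
      + intros Hp _ Hpy. pose proof (prime_ge_2 _ Hp).
        replace (8 * INR k * Rmin (/ y) (/ INR p ^ 2))
          with (2 * (INR k * (4 * Rmin (/ y) (/ INR p ^ 2)))) by ring.
        apply Cmod_cprod_sub1_const.
        * intros j Hj. destruct (Hf j Hj) as [_ [_ Hsmall]].
          apply euler_factor_small_prime; auto; try lia; try lra.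
          intros m. apply f_prime_pow_bounded; auto; lia.
        * pose proof (Rmin_l (/ y) (/ INR p ^ 2)).
          assert (INR k * / y <= 1/16)
            by (apply Rmult_le_reg_r with y; [lra|]; rewrite Rmult_assoc, Rinv_l; lra).
          specialize (Hg p). assert (0 <= Rmin (/ y) (/ INR p ^ 2)) by lra. nra.
      + unfold g. destruct (Rlt_dec 0 (INR p)); [destruct (Rle_dec (INR p) y)|]; lra.
    - rewrite rsum_scal. replace (32 * INR k / sqrt y) with (8 * INR k * (4 / sqrt y)) by (field; lra).
      apply Rmult_le_compat_l; [lra | apply rsum_min_inv_sq; auto; lra]. }
  eapply Rle_trans; [apply Cmod_cprod_sub1|].
  - eapply Rle_trans; [exact S|]. apply Rmult_le_reg_r with (sqrt y); [lra|].
    unfold Rdiv. rewrite Rmult_assoc, Rinv_l by lra. lra.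
  - replace (64 * INR k / sqrt y) with (2 * (32 * INR k / sqrt y)) by (field; lra). lra.
Qed.


Let U := cprod (seq 0 M) (prime_factor_in y X (fun p => MP p / Q p)%C).
Let A := cprod (seq 0 M) (prime_factor_in 0 y Q).
Let B := cprod (seq 0 M) (prime_factor_in y X Q).

Lemma prod_Mp_factor : prod_primes y X MP = (B * U)%C.
Proof.
  destruct threshold_bounds as [H16 _].
  rewrite (prod_primes_seq y X MP M) by (unfold M; lia || lra).
  unfold B, U. rewrite <- cprod_mul. apply cprod_ext. intros p _.
  rewrite <- prime_factor_in_mul. unfold prime_factor_in.
  destruct (prime_dec _) as [Hp|]; [destruct (Rlt_dec _ _) as [Hyp|]; [destruct (Rle_dec _ _)|]|]; auto.
  assert (HQ : 1/2 <= Cmod (Q p)) by (apply Cmod_ge_half, euler_prod_large_prime; auto).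
  assert (Q p <> RtoC 0) by (intros E; rewrite E, Cmod_0 in HQ; lra).
  field; auto.
Qed.

Lemma prod_Pfrak_factor : cprod (seq 0 k) (fun j => Pfrak (f j) X) = (A * B)%C.
Proof.
  destruct threshold_bounds as [H16 _].
  rewrite (cprod_ext _ _ (fun j => cprod (seq 0 M) (prime_factor_in 0 X (euler_factor (f j)))))
    by (intros; rewrite Pfrak_euler_factor; apply prod_primes_seq; unfold M; lia || lra).
  rewrite cprod_comm. unfold A, B. rewrite <- cprod_mul. apply cprod_ext. intros p _.
  rewrite prime_factor_in_cprod, <- prime_factor_in_split by lra. reflexivity.
Qed.

Lemma main_estimate : exists th : C,
  Cmod th <= (64 * D + 256 * INR k) / ln y /\
  prod_primes y X MP = ((1 + th) * cprod (seq 0 k) (fun j => Pfrak (f j) X))%C.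
Proof.
  destruct threshold_bounds as [H16 [_ [_ Hk]]]. assert (HD0 : 0 <= D) by apply local_const_nonneg.
  pose proof (pos_INR k). pose proof large_primes_ratio as HU. pose proof small_primes_euler as HA.
  fold U in HU. fold A in HA.
  assert (Hs : 4 <= sqrt y) by (rewrite <- (sqrt_square 4) by lra; apply sqrt_le_1_alt; lra).
  assert (Hsy : sqrt y * sqrt y = y) by (apply sqrt_sqrt; lra).
  assert (Hsk : 128 * INR k <= sqrt y)
    by (rewrite <- (sqrt_square (128 * INR k)) by lra; apply sqrt_le_1_alt; lra).
  assert (HA2 : 64 * INR k / sqrt y <= 1/2).
  { apply Rmult_le_reg_r with (sqrt y); [lra|]. unfold Rdiv. rewrite Rmult_assoc, Rinv_l by lra. lra. }
  assert (HAn : 1/2 <= Cmod A) by (apply Cmod_ge_half; lra).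
  assert (HA0 : A <> RtoC 0) by (intros E; rewrite E, Cmod_0 in HAn; lra).
  exists (U / A - 1)%C. split.
  - replace (U / A - 1)%C with ((U - 1 - (A - 1)) / A)%C by (field; auto).
    rewrite Cmod_div by auto.
    assert (Cmod (U - 1 - (A - 1))%C <= 16 * D / y + 64 * INR k / sqrt y)
      by (eapply Rle_trans; [apply Cmod_sub_le | lra]).
    assert (Hyy : 16 * D / y <= 16 * D / sqrt y).
    { unfold Rdiv. apply Rmult_le_compat_l; [lra|]. apply Rinv_le_contravar; nra. }
    assert (Hln : 0 < ln y) by (rewrite <- ln_1; apply ln_increasing; lra).
    assert (Hls : ln y <= 2 * sqrt y) by (apply ln_le_2sqrt; lra).
    apply Rle_trans with ((32 * D + 128 * INR k) / sqrt y).
    + apply Rmult_le_reg_r with (Cmod A); [lra|]. unfold Rdiv at 1.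
      rewrite Rmult_assoc, Rinv_l, Rmult_1_r by lra.
      assert (0 <= (32 * D + 128 * INR k) / sqrt y) by (apply Rdiv_le_0_compat; lra).
      replace ((32 * D + 128 * INR k) / sqrt y) with (2 * (16 * D / sqrt y + 64 * INR k / sqrt y))
        in * by (field; lra).
      nra.
    + assert (/ sqrt y <= 2 * / ln y).
      { replace (2 * / ln y) with (/ (ln y / 2)) by (field; lra). apply Rinv_le_contravar; lra. }
      unfold Rdiv. replace (64 * D + 256 * INR k) with (2 * (32 * D + 128 * INR k)) by ring.
      assert (0 <= 32 * D + 128 * INR k) by lra. nra.
  - rewrite prod_Mp_factor, prod_Pfrak_factor. field. auto.
Qed.

End MainEstimate.

Theorem lemma2p4 :
  forall k : nat, exists Ck : R, 0 < Ck /\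
  forall (l : nat) (a : nat -> nat -> nat), primitive_system k l a ->
  forall eps : R, 0 < eps ->
  exists y0 C0 : R, 0 < C0 /\
  forall y X : R, 2 <= y -> y0 <= y -> y <= X ->
  forall f : nat -> nat -> C,
    (forall j, (j < k)%nat ->
       one_bounded (f j) /\ multiplicative (f j) /\
       (forall p mu, is_prime_nat p -> (1 <= mu)%nat -> INR (p ^ mu) <= y ->
          f j (p ^ mu)%nat = RtoC 1)) ->
  exists th1 th2 : C,
    Cmod th1 <= Ck / ln y /\
    Cmod th2 <= C0 * Rpower y (-1 + eps) /\
    prod_primes y X (Mp k l f a) =
      Cmult (Cplus (RtoC 1) th1)
            (Cplus (cprod (seq 0 k) (fun j => Pfrak (f j) X)) th2).
Proof.
  intros k. pose proof (local_const_nonneg k). pose proof (pos_INR k).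
  exists (64 * local_const k + 256 * INR k + 1). split; [lra|].
  intros l a Hsys eps _. exists (threshold k l a), 1. split; [lra|].
  intros y X Hy2 Hy HyX f Hf.
  destruct (main_estimate k l a f y X Hsys Hy HyX Hf) as [th [Hth E]].
  assert (Hln : 0 < ln y) by (rewrite <- ln_1; apply ln_increasing; lra).
  exists th, (RtoC 0). split; [|split].
  - eapply Rle_trans; [exact Hth|]. unfold Rdiv.
    apply Rmult_le_compat_r; [apply Rlt_le, Rinv_0_lt_compat|]; lra.
  - rewrite Cmod_0. pose proof (exp_pos ((-1 + eps) * ln y)). unfold Rpower. lra.
  - rewrite E. ring.
Qed.
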